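(* Assume the setting below, on the A-mesh $S_{1/\varepsilon}$ (i.e. $\lambda=\varepsilon^{-1}$) with mesh parameter $a\ge2$. Let $\mu=\varepsilon^{a-2}\min\{\varepsilon^2,N^{-2}\}$. There exist $N_0$ and $C$, both independent of $\varepsilon$, such that for all $N\ge N_0$, \[ |\tau_i[v]|\le C\begin{cases} (\ln\varepsilon)^2N^{-2}e^{-\beta x_i/\varepsilon}, & 1\le i\le J-1,\\ \mu N, & i=J,\\ \mu, & J+1\le i\le N-1.\end{cases} \]
   Context: Let $0<\varepsilon<1$. Let $b,c,f\in C^4[0,1]$, and let $\beta$ be a constant with $b(x)>\beta>0$ and $c(x)\ge0$ on $[0,1]$. Let $u$ be the solution of $-\varepsilon u''-bu'+cu=f$ on $(0,1)$ with $u(0)=u(1)=0$. Define $v(x)=-\frac{\varepsilon u'(0)}{b(0)}e^{-b(0)x/\varepsilon}$. Mesh $S_\lambda$, $\lambda\in\{N,\varepsilon^{-1}\}$. $N$ is a positive integer. $Q\in(0,1)$ is a fixed rational with $J=QN$ an integer, and $a>0$. Set $\xi=(a\varepsilon/\beta)\ln\lambda$, assumed $\le Q$, and $h=\xi/J$, $H=(1-\xi)/(N-J)$. The mesh points are $x_i=ih$ ($0\le i\le J$) and $x_i=\xi+(i-J)H$ ($J\le i\le N$). Write $h_i=x_i-x_{i-1}$ and $\hbar_i=(h_i+h_{i+1})/2$. Define $D^+g(x_i)=(g(x_{i+1})-g(x_i))/h_{i+1}$, $D^-g(x_i)=(g(x_i)-g(x_{i-1}))/h_i$, $D''g(x_i)=(D^+g(x_i)-D^-g(x_i))/\hbar_i$.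 Let $\sigma(\rho)=2\rho/(e^{2\rho}-1)$ for $\rho>0$, $\sigma(0)=1$, and $\rho_i=b(x_i)h_{i+1}/(2\varepsilon)$. The truncation error of the ASI scheme is $\tau_i[g]=-\varepsilon\sigma(\rho_i)D''g(x_i)-b(x_i)D^+g(x_i)+\varepsilon g''(x_i)+b(x_i)g'(x_i)$ for $1\le i\le N-1$. *)

From Stdlib Require Import Reals Lra Lia.
From Coquelicot Require Import Coquelicot.
Open Scope R_scope.

Definition C4_01 (g : R -> R) : Prop :=
  exists delta : R, 0 < delta /\
    forall x : R, - delta < x < 1 + delta ->
      (forall k : nat, (k <= 4)%nat -> ex_derive_n g k x) /\
      continuous (Derive_n g 4) x.

Definition is_bvp_solution (eps : R) (b c f u : R -> R) : Prop :=
  (exists delta : R, 0 < delta /\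
     forall x : R, - delta < x < 1 + delta ->
       ex_derive u x /\ ex_derive_n u 2 x) /\
  (forall x : R, 0 < x < 1 ->
     - eps * Derive_n u 2 x - b x * Derive u x + c x * u x = f x) /\
  u 0 = 0 /\ u 1 = 0.

Definition vlayer (eps : R) (b u : R -> R) (x : R) : R :=
  - (eps * Derive u 0 / b 0) * exp (- b 0 * x / eps).

Definition xi_mesh (eps a beta lambda : R) : R := a * eps / beta * ln lambda.

Definition mesh (eps a beta lambda : R) (N J : nat) (i : nat) : R :=
  let xi := xi_mesh eps a beta lambda in
  let h := xi / INR J in
  let H := (1 - xi) / (INR N - INR J) in
  if (i <=? J)%nat then INR i * h else xi + (INR i - INR J) * H.

Section Scheme.
Variables (eps a beta lambda : R) (N J : nat).
Let x (i : nat) : R := mesh eps a beta lambda N J i.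

Definition hstep (i : nat) : R := x i - x (i - 1).
Definition hbar (i : nat) : R := (hstep i + hstep (S i)) / 2.

Definition Dplus (g : R -> R) (i : nat) : R := (g (x (S i)) - g (x i)) / hstep (S i).
Definition Dminus (g : R -> R) (i : nat) : R := (g (x i) - g (x (i - 1))) / hstep i.
Definition Dsecond (g : R -> R) (i : nat) : R := (Dplus g i - Dminus g i) / hbar i.

Definition sigma (rho : R) : R :=
  if Rlt_dec 0 rho then 2 * rho / (exp (2 * rho) - 1) else 1.

Definition rho (b : R -> R) (i : nat) : R := b (x i) * hstep (S i) / (2 * eps).

Definition tau (b g : R -> R) (i : nat) : R :=
  - eps * sigma (rho b i) * Dsecond g i - b (x i) * Dplus g i
  + eps * Derive_n g 2 (x i) + b (x i) * Derive g (x i).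
End Scheme.

(* The layer term [v] is [K0 exp (- b(0) x / eps)] with [K0 = - eps u'(0) / b(0)],
   and [K0] is bounded independently of [eps] by comparing [u] with barrier
   functions through the maximum principle.  Divided differences of an
   exponential are explicit, so [tau_i[v] = K0 exp (- b(0) x_i / eps) T] where
   [T] involves the Bernoulli function [B y = y / (e^y - 1)], with
   [sigma rho = B (2 rho)].  Where [h_i = h_(i+1)] the fitted scheme is exact
   for [b (x_i) = b(0)], so [T] is a multiple of the Taylor remainder of [B];
   since [|b (x_i) - b(0)| <= L x_i] this is [(h/eps)^2] times a polynomial in
   [x_i / eps], which a fraction of the surplus decay
   [exp (- (b(0) - beta) x_i / eps)] absorbs.  On the fine mesh
   [h / eps = O(ln (1/eps) / N)]; beyond the transition point
   [exp (- beta xi / eps) = eps^a].  At [x_J] the steps differ: [T] is bounded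
   crudely when [eps N <= 1], and by expansion in [b(0) H / eps = O(1)] when
   [eps N > 1]. *)

From Pilot Require Import Defs.
From Stdlib Require Import Reals Lra Lia.
From Coquelicot Require Import Coquelicot.
Open Scope R_scope.

Lemma is_derive_continuity_pt f x l : is_derive f x l -> continuity_pt f x.
Proof.
  intros H. apply continuity_pt_filterlim, (ex_derive_continuous f x). now exists l.
Qed.

Lemma Rmult_le_compat4 a b c d a' b' c' d' :
  0 <= a -> 0 <= b -> 0 <= c -> 0 <= d ->
  a <= a' -> b <= b' -> c <= c' -> d <= d' -> a * b * c * d <= a' * b' * c' * d'.
Proof.
  intros. repeat apply Rmult_le_compat; auto; repeat apply Rmult_le_pos; auto.
Qed.

Lemma Rabs_mul_le (x y a c : R) : Rabs x <= a -> Rabs y <= c -> Rabs (x * y) <= a * c.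
Proof. intros. rewrite Rabs_mult. apply Rmult_le_compat; auto; apply Rabs_pos. Qed.

Lemma le_mul_const_weaken y c C X : y <= c * X -> c <= C -> 0 <= X -> y <= C * X.
Proof. intros. eapply Rle_trans; [eassumption|]. now apply Rmult_le_compat_r. Qed.

Lemma abs_sub_le_mvt f f' a b M :
  (forall c, Rmin a b <= c <= Rmax a b -> is_derive f c (f' c)) ->
  (forall c, Rmin a b <= c <= Rmax a b -> Rabs (f' c) <= M) ->
  Rabs (f b - f a) <= M * Rabs (b - a).
Proof.
  intros Hd HM.
  destruct (MVT_gen f a b f') as [c [Hc Heq]].
  - intros x Hx. apply Hd. lra.
  - intros x Hx. apply (is_derive_continuity_pt _ _ (f' x)), Hd. lra.
  - rewrite Heq, Rabs_mult. apply Rmult_le_compat_r; [apply Rabs_pos|]. now apply HM.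
Qed.

(** * Exponential inequalities *)

Lemma nonneg_of_derive_nonneg (g dg : R -> R) :
  g 0 = 0 ->
  (forall x, 0 <= x -> is_derive g x (dg x)) ->
  (forall x, 0 <= x -> 0 <= dg x) ->
  forall t, 0 <= t -> 0 <= g t.
Proof.
  intros H0 Hd Hp t Ht. rewrite <- H0.
  destruct (Req_dec 0 t) as [<-|Hne]; [lra|].
  destruct (MVT_gen g 0 t dg) as [c [Hc Heq]];
    unfold Rmin, Rmax in *; destruct (Rle_dec 0 t); try lra.
  - intros x Hx. apply Hd. lra.
  - intros x Hx. apply (is_derive_continuity_pt _ _ (dg x)), Hd. lra.
  - assert (0 <= dg c * (t - 0)) by (apply Rmult_le_pos; [apply Hp|]; lra). lra.
Qed.

Lemma exp_le_exp x y : x <= y -> exp x <= exp y.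
Proof. intros [H| ->]; [left; now apply exp_increasing | lra]. Qed.

Lemma exp_mul_exp_opp y : exp y * exp (- y) = 1.
Proof. rewrite <- exp_plus, Rplus_opp_r. apply exp_0. Qed.

Lemma expm1_pos y : 0 < y -> 0 < exp y - 1.
Proof. intros Hy. pose proof (exp_increasing 0 y Hy). rewrite exp_0 in *. lra. Qed.

Lemma exp_opp_le_1 y : 0 <= y -> exp (- y) <= 1.
Proof. intros Hy. rewrite <- exp_0. apply exp_le_exp. lra. Qed.

Lemma exp_ge_taylor2 t : 0 <= t -> 1 + t + t^2/2 <= exp t.
Proof.
  intros Ht.
  enough (0 <= exp t - 1 - t - t^2/2) by lra.
  apply (nonneg_of_derive_nonneg (fun t => exp t - 1 - t - t^2/2) (fun t => exp t - 1 - t));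
    auto.
  - simpl. rewrite exp_0. field.
  - intros x _. auto_derive; auto. field.
  - intros x _. pose proof (exp_ineq1_le x). lra.
Qed.

Lemma exp_le_taylor1_rem t : 0 <= t -> exp t <= 1 + t + t^2 * exp t / 2.
Proof.
  intros Ht.
  enough (0 <= 1 + t + t^2 * exp t / 2 - exp t) by lra.
  apply (nonneg_of_derive_nonneg (fun t => 1 + t + t^2 * exp t / 2 - exp t)
           (fun t => 1 - exp t * (1 - t - t^2/2))); auto.
  - simpl. rewrite exp_0. field.
  - intros x _. auto_derive; auto. field.
  - intros x Hx. pose proof (exp_ineq1_le (- x)). pose proof (exp_mul_exp_opp x).
    pose proof (exp_pos x).
    assert (1 - x - x^2/2 <= exp (- x)) by nra. nra.
Qed.

Lemma exp_le_taylor2_rem t : 0 <= t -> exp t <= 1 + t + t^2/2 + t^3 * exp t / 6.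
Proof.
  intros Ht.
  enough (0 <= 1 + t + t^2/2 + t^3 * exp t / 6 - exp t) by lra.
  apply (nonneg_of_derive_nonneg (fun t => 1 + t + t^2/2 + t^3 * exp t / 6 - exp t)
           (fun t => 1 + t + (t^2/2 + t^3/6) * exp t - exp t)); auto.
  - simpl. rewrite exp_0. field.
  - intros x _. auto_derive; auto. field.
  - intros x Hx. pose proof (exp_le_taylor1_rem x Hx). pose proof (exp_pos x).
    assert (0 <= x^3/6 * exp x) by (apply Rmult_le_pos; [apply Rmult_le_pos; [apply pow_le|]|]; lra).
    nra.
Qed.

Lemma exp_opp_le_taylor2 t : 0 <= t -> exp (- t) <= 1 - t + t^2/2.
Proof.
  intros Ht.
  enough (0 <= 1 - t + t^2/2 - exp (- t)) by lra.
  apply (nonneg_of_derive_nonneg (fun t => 1 - t + t^2/2 - exp (- t))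
           (fun t => -1 + t + exp (- t))); auto.
  - simpl. rewrite Ropp_0, exp_0. field.
  - intros x _. auto_derive; auto. field.
  - intros x _. pose proof (exp_ineq1_le (- x)). lra.
Qed.

Lemma exp_opp_ge_taylor3 t : 0 <= t -> 1 - t + t^2/2 - t^3/6 <= exp (- t).
Proof.
  intros Ht.
  enough (0 <= exp (- t) - (1 - t + t^2/2 - t^3/6)) by lra.
  apply (nonneg_of_derive_nonneg (fun t => exp (- t) - (1 - t + t^2/2 - t^3/6))
           (fun t => - exp (- t) + 1 - t + t^2/2)); auto.
  - simpl. rewrite Ropp_0, exp_0. field.
  - intros x _. auto_derive; auto. field.
  - intros x Hx. pose proof (exp_opp_le_taylor2 x Hx). lra.
Qed.

Lemma sinh_ge t : 0 <= t -> 2 * t <= exp t - exp (- t).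
Proof.
  intros Ht.
  enough (0 <= exp t - exp (- t) - 2 * t) by lra.
  apply (nonneg_of_derive_nonneg (fun t => exp t - exp (- t) - 2 * t)
           (fun t => exp t + exp (- t) - 2)); auto.
  - simpl. rewrite Ropp_0, exp_0. field.
  - intros x _. auto_derive; auto. field.
  - intros x _. pose proof (exp_ineq1_le x). pose proof (exp_ineq1_le (- x)). lra.
Qed.

Lemma poly_mul_exp_opp_le6 (g z : R) : 0 < g <= 1 -> 0 <= z ->
  (1 + z)^6 * exp (- g * z) <= (6 / g)^6.
Proof.
  intros Hg Hz.
  assert (H1 : (g / 6 * (1 + z))^6 <= (1 + g * z / 6)^6).
  { apply pow_incr. split; [apply Rmult_le_pos; [apply Rdiv_le_0_compat|]|unfold Rdiv; nra]; lra. }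
  assert (H2 : (1 + g * z / 6)^6 <= exp (g * z)).
  { replace (exp (g * z)) with (exp (g * z / 6) ^ 6)
      by (simpl; rewrite Rmult_1_r, <- !exp_plus; f_equal; field).
    apply pow_incr. split; [|apply exp_ineq1_le].
    assert (0 <= g * z / 6) by (apply Rdiv_le_0_compat; [apply Rmult_le_pos|]; lra). lra. }
  rewrite Rpow_mult_distr in H1.
  assert (Hg6 : 0 < (g / 6)^6) by (apply pow_lt, Rdiv_lt_0_compat; lra).
  replace ((6 / g)^6) with (exp (g * z) * exp (- g * z) / (g / 6)^6).
  2:{ replace (- g * z) with (- (g * z)) by ring. rewrite exp_mul_exp_opp.
      field. lra. }
  apply (Rle_div_r _ _ _ Hg6).
  replace (exp (g * z) * exp (- g * z)) with (exp (- g * z) * exp (g * z)) by ring.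
  replace ((1 + z) ^ 6 * exp (- g * z) * (g / 6) ^ 6) with (exp (- g * z) * ((g / 6) ^ 6 * (1 + z) ^ 6)) by ring.
  apply Rmult_le_compat_l; [left; apply exp_pos|lra].
Qed.

Definition poly_exp_const (bm g : R) := (1 + bm)^4 * (6 / Rmin g 1)^6.

Lemma poly_exp_const_nonneg bm g : 0 <= bm -> 0 < g -> 0 <= poly_exp_const bm g.
Proof.
  intros Hb Hg. unfold poly_exp_const. apply Rmult_le_pos; apply pow_le; [lra|].
  unfold Rmin; destruct (Rle_dec g 1); apply Rdiv_le_0_compat; lra.
Qed.

Lemma poly_mul_exp_opp_bound (bm g z : R) : 0 <= bm -> 0 < g -> 0 <= z ->
  z^2 * (1 + bm * z)^4 * exp (- g * z) <= poly_exp_const bm g.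
Proof.
  intros Hb Hg Hz. unfold poly_exp_const. set (c := Rmin g 1).
  assert (Hc : 0 < c <= 1) by (unfold c, Rmin; destruct (Rle_dec g 1); lra).
  assert (Hcg : c <= g) by (unfold c, Rmin; destruct (Rle_dec g 1); lra).
  assert (Hp : z^2 * (1 + bm * z)^4 <= (1 + bm)^4 * (1 + z)^6).
  { assert (z^2 <= (1 + z)^2) by (apply pow_incr; lra).
    assert ((1 + bm * z)^4 <= ((1 + bm) * (1 + z))^4) by (apply pow_incr; split; nra).
    rewrite Rpow_mult_distr in H0.
    replace ((1 + bm)^4 * (1 + z)^6) with ((1 + z)^2 * ((1 + bm)^4 * (1 + z)^4)) by ring.
    apply Rmult_le_compat; auto. apply pow2_ge_0. apply pow_le; nra. }
  assert (He : exp (- g * z) <= exp (- c * z)) by (apply exp_le_exp; nra).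
  pose proof (poly_mul_exp_opp_le6 c z Hc Hz).
  assert (0 <= (1 + bm)^4) by (apply pow_le; lra).
  apply Rle_trans with ((1 + bm)^4 * (1 + z)^6 * exp (- c * z)).
  - apply Rmult_le_compat; auto. apply Rmult_le_pos; [apply pow2_ge_0|apply pow_le; nra].
    left; apply exp_pos.
  - rewrite Rmult_assoc. apply Rmult_le_compat_l; auto.
Qed.

Lemma mul_exp_opp_le_inv (k l : R) : 0 < k -> 0 <= l -> l * exp (- k * l) <= / k.
Proof.
  intros Hk Hl. pose proof (exp_ineq1_le (k * l)). pose proof (exp_pos (- k * l)).
  pose proof (exp_mul_exp_opp (k * l)). replace (- (k * l)) with (- k * l) in * by ring.
  apply Rmult_le_reg_l with k; auto. rewrite Rinv_r by lra. nra.
Qed.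

(** * The Bernoulli function [bern y = y / (e^y - 1)]; [sigma rho = bern (2 rho)]. *)

Definition bern (y : R) := y / (exp y - 1).
Definition bern_d1 (y : R) := (exp y - 1 - y * exp y) / (exp y - 1)^2.
Definition bern_d2_num (y : R) := y * exp y + y - 2 * exp y + 2.
Definition bern_d2 (y : R) := exp y * bern_d2_num y / (exp y - 1)^3.

Lemma is_derive_bern y : 0 < y -> is_derive bern y (bern_d1 y).
Proof.
  intros Hy. pose proof (expm1_pos y Hy). unfold bern, bern_d1.
  auto_derive; [lra|]. field. lra.
Qed.

Lemma is_derive_bern_d1 y : 0 < y -> is_derive bern_d1 y (bern_d2 y).
Proof.
  intros Hy. pose proof (expm1_pos y Hy). unfold bern_d1, bern_d2, bern_d2_num.
  auto_derive.
  - rewrite Rmult_1_r. apply Rmult_integral_contrapositive. split; lra.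
  - field. lra.
Qed.

Lemma bern_bounds y : 0 < y -> 0 < bern y <= 1 /\ bern y <= (1 + y) * exp (- y).
Proof.
  intros Hy. unfold bern. pose proof (expm1_pos y Hy). pose proof (exp_ineq1_le y).
  pose proof (exp_mul_exp_opp y). pose proof (exp_pos y). pose proof (exp_pos (- y)).
  split; [split|].
  - apply Rdiv_lt_0_compat; lra.
  - apply Rle_div_l; lra.
  - apply Rle_div_l; nra.
Qed.

Lemma bern_d1_bounds y : 0 < y -> -1/2 <= bern_d1 y <= 0.
Proof.
  intros Hy. pose proof (expm1_pos y Hy). unfold bern_d1.
  pose proof (exp_mul_exp_opp y). pose proof (exp_pos y). pose proof (exp_pos (- y)).
  pose proof (exp_ineq1_le (- y)). pose proof (sinh_ge y (Rlt_le _ _ Hy)).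
  assert (Hp : 0 < (exp y - 1)^2) by (apply pow_lt; lra).
  split.
  - apply (Rle_div_r _ _ _ Hp).
    assert (2 * y * exp y <= (exp y - exp (- y)) * exp y) by (apply Rmult_le_compat_r; lra).
    assert ((exp y - exp (- y)) * exp y = exp y * exp y - 1) by nra.
    simpl. nra.
  - apply (Rle_div_l _ _ _ Hp). nra.
Qed.

Lemma bern_d2_num_bounds y : 0 <= y -> 0 <= bern_d2_num y <= y^3 * exp y / 6.
Proof.
  intros Hy. unfold bern_d2_num. split.
  - apply (nonneg_of_derive_nonneg (fun t => t * exp t + t - 2 * exp t + 2)
             (fun t => 1 + (t - 1) * exp t)); auto.
    + cbv beta. rewrite exp_0. ring.
    + intros x _. auto_derive; auto. field.
    + intros x _. pose proof (exp_ineq1_le (- x)). pose proof (exp_mul_exp_opp x).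
      pose proof (exp_pos x). nra.
  - enough (0 <= y^3 * exp y / 6 - (y * exp y + y - 2 * exp y + 2)) by lra.
    apply (nonneg_of_derive_nonneg (fun t => t^3 * exp t / 6 - (t * exp t + t - 2 * exp t + 2))
             (fun t => (t^2/2 + t^3/6) * exp t - 1 - (t - 1) * exp t)); auto.
    + simpl. rewrite exp_0. field.
    + intros x _. auto_derive; auto. field.
    + intros x Hx. pose proof (exp_opp_le_taylor2 x Hx). pose proof (exp_mul_exp_opp x).
      pose proof (exp_pos x).
      assert (0 <= x^3/6) by (apply Rmult_le_pos; [apply pow_le|]; lra).
      assert (1 <= (1 - x + x^2/2 + x^3/6) * exp x) by nra.
      nra.
Qed.

Lemma bern_d2_bounds y : 0 < y -> 0 <= bern_d2 y <= (1 + y)^3 * exp (- y) / 6.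
Proof.
  intros Hy. pose proof (expm1_pos y Hy).
  destruct (bern_d2_num_bounds y (Rlt_le _ _ Hy)) as [N0 N1].
  destruct (bern_bounds y Hy) as [[B0 B1] B2].
  pose proof (exp_mul_exp_opp y). pose proof (exp_pos y). pose proof (exp_pos (- y)).
  assert (Hp : 0 < (exp y - 1)^3) by (apply pow_lt; lra).
  unfold bern_d2. split.
  - apply Rdiv_le_0_compat; auto. apply Rmult_le_pos; lra.
  - assert (exp y * bern_d2_num y / (exp y - 1)^3 <= exp y * exp y * bern y ^ 3 / 6).
    { apply (Rle_div_l _ _ _ Hp).
      replace (exp y * exp y * bern y ^ 3 / 6 * (exp y - 1) ^ 3) with (exp y * (y^3 * exp y / 6))
        by (unfold bern; field; lra).
      apply Rmult_le_compat_l; lra. }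
    assert (bern y ^ 3 <= ((1 + y) * exp (- y))^3) by (apply pow_incr; lra).
    assert (exp y * exp y * ((1 + y) * exp (- y))^3 = (1 + y)^3 * exp (- y)).
    { replace (exp y * exp y * ((1 + y) * exp (- y))^3)
        with ((1 + y)^3 * exp (- y) * (exp y * exp (- y))^2) by ring.
      rewrite exp_mul_exp_opp. ring. }
    assert (0 <= exp y * exp y) by nra.
    nra.
Qed.

Lemma bern_lipschitz S A : 0 < S -> 0 < A -> Rabs (bern S - bern A) <= / 2 * Rabs (S - A).
Proof.
  intros HS HA. apply (abs_sub_le_mvt bern bern_d1).
  - intros c Hc. apply is_derive_bern. unfold Rmin in Hc; destruct (Rle_dec A S); lra.
  - intros c Hc. assert (0 < c) by (unfold Rmin in Hc; destruct (Rle_dec A S); lra).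
    pose proof (bern_d1_bounds c H). apply Rabs_le. lra.
Qed.

Lemma bern_d1_lipschitz A c M :
  0 < Rmin A c ->
  (forall d, Rmin A c <= d <= Rmax A c -> bern_d2 d <= M) ->
  Rabs (bern_d1 c - bern_d1 A) <= M * Rabs (c - A).
Proof.
  intros Hm HM. apply (abs_sub_le_mvt bern_d1 bern_d2).
  - intros d Hd. apply is_derive_bern_d1. lra.
  - intros d Hd. assert (0 < d) by lra.
    rewrite Rabs_pos_eq by exact (proj1 (bern_d2_bounds d H)). auto.
Qed.

Lemma bern_taylor1_rem S A : 0 < S -> 0 < A ->
  Rabs (bern S - bern A - bern_d1 A * (S - A))
    <= (S - A)^2 * ((1 + Rmax S A)^3 * exp (- Rmin S A) / 6).
Proof.
  intros HS HA.
  set (M2 := (1 + Rmax S A)^3 * exp (- Rmin S A) / 6).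
  assert (HM2 : forall d, Rmin S A <= d <= Rmax S A -> bern_d2 d <= M2).
  { intros d Hd. assert (0 < d) by (unfold Rmin in Hd; destruct (Rle_dec S A); lra).
    apply Rle_trans with (1 := proj2 (bern_d2_bounds d H)).
    unfold M2, Rdiv. apply Rmult_le_compat_r; [lra|].
    apply Rmult_le_compat; [apply pow_le; lra|left; apply exp_pos| |].
    - apply pow_incr; lra.
    - apply exp_le_exp; lra. }
  assert (HM20 : 0 <= M2).
  { unfold M2. apply Rmult_le_pos; [|lra]. apply Rmult_le_pos; [|left; apply exp_pos].
    apply pow_le; unfold Rmax; destruct (Rle_dec S A); lra. }
  replace (bern S - bern A - bern_d1 A * (S - A))
    with ((bern S - bern_d1 A * S) - (bern A - bern_d1 A * A)) by ring.
  replace ((S - A)^2 * M2) with (M2 * Rabs (S - A) * Rabs (S - A))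
    by (rewrite Rmult_assoc, <- Rabs_mult, Rabs_pos_eq; [ring|apply (Rle_0_sqr (S - A))]).
  apply (abs_sub_le_mvt (fun s => bern s - bern_d1 A * s) (fun s => bern_d1 s - bern_d1 A)).
  - intros c Hc. assert (0 < c) by (unfold Rmin in Hc; destruct (Rle_dec A S); lra).
    apply (is_derive_minus bern (fun s => bern_d1 A * s)); [now apply is_derive_bern|].
    set (k := bern_d1 A). auto_derive; auto. ring.
  - intros c Hc.
    unfold Rmin, Rmax in *.
    eapply Rle_trans; [apply (bern_d1_lipschitz A c M2)|].
    + unfold Rmin. destruct (Rle_dec A c); destruct (Rle_dec A S); lra.
    + intros d Hd. apply HM2. unfold Rmin, Rmax in *.
      destruct (Rle_dec A c), (Rle_dec A S), (Rle_dec S A); lra.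
    + apply Rmult_le_compat_l; [lra|].
      destruct (Rle_dec A S); unfold Rabs;
        destruct (Rcase_abs (c - A)), (Rcase_abs (S - A)); lra.
Qed.

(** * Truncation error of the scheme on an exponential *)

(* [tau_exp eps b0 bi p q] is the truncation error of the scheme applied to
   [y |-> exp (- b0 (y - x_i) / eps)] at a node [x_i] with [h_i = p],
   [h_(i+1) = q] and [b (x_i) = bi]. *)
Definition tau_exp (eps b0 bi p q : R) : R :=
  let k := b0 / eps in let A := k * q in let G := k * p in let S := bi * q / eps in
  - eps * bern S * ((2 / (p + q)) * ((exp (- A) - 1) / q - (1 - exp G) / p))
  - bi * ((exp (- A) - 1) / q) + eps * k ^ 2 - bi * k.

Lemma vlayer_derive eps (b u : R -> R) y : 0 < eps ->
  Derive (vlayer eps b u) y = - (eps * Derive u 0 / b 0) * exp (- b 0 * y / eps) * (- b 0 / eps).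
Proof.
  intros He. apply is_derive_unique. unfold vlayer.
  set (K0 := - (eps * Derive u 0 / b 0)). set (c0 := b 0).
  auto_derive; auto. unfold Rdiv. field. lra.
Qed.

Lemma vlayer_derive2 eps (b u : R -> R) y : 0 < eps ->
  Derive_n (vlayer eps b u) 2 y = - (eps * Derive u 0 / b 0) * exp (- b 0 * y / eps) * (b 0 / eps)^2.
Proof.
  intros He. simpl Derive_n.
  rewrite (Derive_ext _ (fun y => - (eps * Derive u 0 / b 0) * exp (- b 0 * y / eps) * (- b 0 / eps)))
    by (intros; now apply vlayer_derive).
  apply is_derive_unique.
  set (K0 := - (eps * Derive u 0 / b 0)). set (c0 := b 0).
  auto_derive; auto. unfold Rdiv. field. lra.
Qed.

Lemma tau_vlayer_node eps a beta lam N J (b u : R -> R) i :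
  let x := mesh eps a beta lam N J in
  (1 <= i)%nat -> 0 < eps -> 0 < b 0 -> 0 < x i - x (i - 1)%nat -> 0 < x (S i) - x i ->
  0 < b (x i) ->
  tau eps a beta lam N J b (vlayer eps b u) i =
    - (eps * Derive u 0 / b 0) * exp (- b 0 * x i / eps)
    * tau_exp eps (b 0) (b (x i)) (x i - x (i - 1)%nat) (x (S i) - x i).
Proof.
  intros x Hi He Hb0 Hp Hq Hbi.
  unfold tau, Dsecond, Dplus, Defs.Dminus, hbar, rho, hstep.
  replace (S i - 1)%nat with i by lia.
  rewrite vlayer_derive, vlayer_derive2 by auto.
  fold x. set (xm := x (i - 1)%nat) in *. set (x0 := x i) in *. set (xp := x (S i)) in *.
  set (c0 := b 0) in *. set (bi := b x0) in *.
  set (p := x0 - xm) in *. set (q := xp - x0) in *.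
  unfold vlayer. fold c0.
  assert (Exp : exp (- c0 * xp / eps) = exp (- c0 * x0 / eps) * exp (- (c0 / eps * q))).
  { rewrite <- exp_plus. f_equal. unfold q. field. lra. }
  assert (Exm : exp (- c0 * xm / eps) = exp (- c0 * x0 / eps) * exp (c0 / eps * p)).
  { rewrite <- exp_plus. f_equal. unfold p. field. lra. }
  rewrite Exp, Exm.
  assert (HS : 0 < bi * q / eps) by (apply Rdiv_lt_0_compat; [apply Rmult_lt_0_compat|]; lra).
  unfold Defs.sigma. destruct (Rlt_dec 0 (bi * q / (2 * eps))) as [Hr|Hr].
  2:{ exfalso. apply Hr. apply Rdiv_lt_0_compat; [apply Rmult_lt_0_compat|]; lra. }
  replace (2 * (bi * q / (2 * eps))) with (bi * q / eps) by (field; lra).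
  pose proof (expm1_pos _ HS).
  unfold tau_exp, bern. fold p q.
  field. repeat split; lra.
Qed.

Definition wcosh (A : R) := exp A + exp (- A) - 2.

Lemma wcosh_bounds A : 0 <= A -> A^2 - A^3/6 <= wcosh A <= A^2 + A^3 * exp A / 6.
Proof.
  intros HA. unfold wcosh.
  pose proof (exp_ge_taylor2 A HA). pose proof (exp_le_taylor2_rem A HA).
  pose proof (exp_opp_le_taylor2 A HA). pose proof (exp_opp_ge_taylor3 A HA).
  split; lra.
Qed.

Lemma wcosh_le A : 0 < A -> 0 <= wcosh A <= A^2 * (1 + A) * exp A.
Proof.
  intros HA. destruct (wcosh_bounds A (Rlt_le _ _ HA)) as [_ HW].
  pose proof (exp_pos A). pose proof (exp_ineq1_le A). pose proof (exp_ineq1_le (- A)).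
  split; [unfold wcosh; lra|].
  assert (A^2 <= A^2 * exp A) by (pose proof (pow2_ge_0 A); nra).
  assert (0 <= A^3 * exp A) by (apply Rmult_le_pos; [apply pow_le|]; lra).
  simpl in *. nra.
Qed.

(* The scheme is exact for the exponential when [bi = b0]; for [p = q] the error
   is then a multiple of the Taylor remainder of [bern] at [b0 q / eps]. *)
Lemma tau_exp_uniform eps b0 bi q : 0 < eps -> 0 < b0 -> 0 < bi -> 0 < q ->
  tau_exp eps b0 bi q q = - (eps / q^2) * wcosh (b0 * q / eps)
     * (bern (bi * q / eps) - bern (b0 * q / eps)
        - bern_d1 (b0 * q / eps) * (bi * q / eps - b0 * q / eps)).
Proof.
  intros He Hb0 Hbi Hq. unfold tau_exp, wcosh, bern, bern_d1.
  set (A := b0 / eps * q). replace (b0 * q / eps) with A by (unfold A; field; lra).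
  set (S := bi * q / eps).
  assert (HA : 0 < A) by (unfold A; apply Rmult_lt_0_compat; [apply Rdiv_lt_0_compat|]; lra).
  assert (HS : 0 < S) by (unfold S; apply Rdiv_lt_0_compat; [apply Rmult_lt_0_compat|]; lra).
  pose proof (expm1_pos A HA). pose proof (expm1_pos S HS). pose proof (exp_pos A).
  rewrite exp_Ropp.
  assert (bi = S * eps / q) by (unfold S; field; lra).
  assert (b0 = A * eps / q) by (unfold A; field; lra).
  rewrite H2, H3. replace (b0 / eps) with (A / q) by (rewrite H3; field; lra).
  field. repeat split; lra.
Qed.

Lemma tau_exp_uniform_factors eps b0 bi q x : 0 < eps -> 0 < q -> 0 < b0 -> 0 < bi ->
  let A := b0 * q / eps in let S := bi * q / eps in
  Rabs (exp (- b0 * x / eps) * tau_exp eps b0 bi q q) <=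
    (eps / q^2 * A^2) * ((S - A)^2 / 6) * ((1 + A) * (1 + Rmax S A)^3)
    * (exp (- b0 * x / eps) * (exp A * exp (- Rmin S A))).
Proof.
  intros He Hq Hb0 Hbi A S.
  rewrite tau_exp_uniform by lra. fold A S.
  assert (HA0 : 0 < A) by (unfold A; apply Rdiv_lt_0_compat; [apply Rmult_lt_0_compat|]; lra).
  assert (HS0 : 0 < S) by (unfold S; apply Rdiv_lt_0_compat; [apply Rmult_lt_0_compat|]; lra).
  destruct (wcosh_le A HA0) as [HW0 HW].
  pose proof (bern_taylor1_rem S A HS0 HA0) as HR.
  set (E := exp (- b0 * x / eps)). set (M := Rmax S A) in *. set (m := Rmin S A) in *.
  pose proof (exp_pos A). pose proof (exp_pos (- m)).
  assert (Hq2 : 0 < eps / q^2) by (apply Rdiv_lt_0_compat; [|apply pow_lt]; lra).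
  assert (HM : 0 <= M) by (unfold M, Rmax; destruct (Rle_dec S A); lra).
  rewrite !Rabs_mult, (Rabs_pos_eq E) by (left; apply exp_pos).
  rewrite Rabs_Ropp, (Rabs_pos_eq (eps / q^2)), (Rabs_pos_eq (wcosh A)) by lra.
  apply Rle_trans with
    (E * (eps / q^2 * (A^2 * (1 + A) * exp A) * ((S - A)^2 * ((1 + M)^3 * exp (- m) / 6)))).
  - apply Rmult_le_compat_l; [left; apply exp_pos|].
    apply Rmult_le_compat; [apply Rmult_le_pos; lra|apply Rabs_pos| |exact HR].
    apply Rmult_le_compat_l; lra.
  - right. field. lra.
Qed.

Lemma tau_exp_uniform_bound eps b0 bi q x L bmax :
  0 < eps -> 0 < q <= x -> 0 < b0 <= bmax -> 0 < bi <= bmax -> 0 <= L ->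
  Rabs (bi - b0) <= L * x ->
  Rabs (exp (- b0 * x / eps) * tau_exp eps b0 bi q q) <=
    bmax^2 / eps * (L * x * (q / eps))^2 / 6 * (1 + bmax * (x / eps))^4
      * exp (- (b0 - L * q) * x / eps).
Proof.
  intros He Hq Hb0 Hbi HL Hd.
  eapply Rle_trans; [apply tau_exp_uniform_factors; lra|].
  set (A := b0 * q / eps). set (S := bi * q / eps).
  set (z := x / eps). set (r := q / eps).
  set (M := Rmax S A). set (m := Rmin S A).
  assert (Hr : 0 < r) by (unfold r; apply Rdiv_lt_0_compat; lra).
  assert (Hrz : r <= z) by (apply Rmult_le_compat_r; [left; apply Rinv_0_lt_compat|]; lra).
  assert (HA : A = b0 * r) by (unfold A, r; field; lra).
  assert (HS : S = bi * r) by (unfold S, r; field; lra).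
  assert (HSA : Rabs (S - A) <= L * x * r).
  { rewrite HS, HA. replace (bi * r - b0 * r) with ((bi - b0) * r) by ring.
    rewrite Rabs_mult, (Rabs_pos_eq r) by lra. apply Rmult_le_compat_r; lra. }
  assert (HM : 0 <= M <= bmax * z).
  { unfold M, Rmax. destruct (Rle_dec S A); [rewrite HA|rewrite HS]; split; nra. }
  assert (HA0 : 0 < A <= bmax * z) by (rewrite HA; split; nra).
  replace (bmax^2 / eps * (L * x * r)^2 / 6) with (bmax^2 / eps * ((L * x * r)^2 / 6))
    by (field; lra).
  apply Rmult_le_compat4.
  - apply Rmult_le_pos; [apply Rdiv_le_0_compat; [|apply pow_lt]; lra|apply pow2_ge_0].
  - apply Rmult_le_pos; [apply pow2_ge_0|lra].
  - apply Rmult_le_pos; [lra|apply pow_le; lra].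
  - apply Rmult_le_pos; [left; apply exp_pos|apply Rmult_le_pos; left; apply exp_pos].
  - replace (eps / q^2 * A^2) with (b0^2 / eps) by (unfold A; field; lra).
    apply Rmult_le_compat_r; [left; apply Rinv_0_lt_compat; lra|apply pow_incr; lra].
  - apply Rmult_le_compat_r; [lra|].
    rewrite <- (pow2_abs (S - A)). apply pow_incr. split; [apply Rabs_pos|exact HSA].
  - replace ((1 + bmax * z)^4) with ((1 + bmax * z) * (1 + bmax * z)^3) by ring.
    apply Rmult_le_compat; [lra|apply pow_le; lra|lra|apply pow_incr; lra].
  - rewrite <- !exp_plus. apply exp_le_exp.
    assert (A - m <= L * q * x / eps).
    { replace (L * q * x / eps) with (L * x * r) by (unfold r; field; lra).
      apply Rle_trans with (Rabs (S - A)); [|lra].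
      unfold m, Rmin, Rabs. destruct (Rle_dec S A), (Rcase_abs (S - A)); lra. }
    replace (- (b0 - L * q) * x / eps) with (- b0 * x / eps + L * q * x / eps) by (field; lra).
    lra.
Qed.

Lemma tau_exp_uniform_decay eps q x b0 bi L bmax beta gam :
  0 < eps <= 1 -> 0 < q <= x -> 0 < b0 <= bmax -> 0 < bi <= bmax -> 0 <= L ->
  Rabs (bi - b0) <= L * x -> 0 < gam -> beta + 2 * gam <= b0 -> L * q <= gam ->
  Rabs (exp (- b0 * x / eps) * tau_exp eps b0 bi q q) <=
    bmax^2 * L^2 / 6 * poly_exp_const bmax gam * (q / eps)^2 * exp (- beta * x / eps).
Proof.
  intros He Hq Hb0 Hbi HL Hd Hg Hbg HLq.
  eapply Rle_trans; [apply (tau_exp_uniform_bound eps b0 bi q x L bmax); auto; lra|].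
  set (z := x / eps). set (K := bmax^2 * L^2 / 6 * (q / eps)^2).
  assert (Hz : 0 <= z) by (unfold z; apply Rdiv_le_0_compat; lra).
  assert (HK : 0 <= K) by (unfold K; pose proof (pow2_ge_0 bmax); pose proof (pow2_ge_0 L);
                          pose proof (pow2_ge_0 (q / eps)); apply Rmult_le_pos; [|lra]; nra).
  assert (HP : 0 <= z^2 * (1 + bmax * z)^4) by (apply Rmult_le_pos; [apply pow2_ge_0|apply pow_le; nra]).
  replace (bmax ^ 2 / eps * (L * x * (q / eps)) ^ 2 / 6 * (1 + bmax * z) ^ 4
           * exp (- (b0 - L * q) * x / eps))
    with (K * (z^2 * (1 + bmax * z)^4) * (eps * exp (- (b0 - L * q) * x / eps)))
    by (unfold K, z; field; lra).
  assert (Hexp : exp (- (b0 - L * q) * x / eps) <= exp (- gam * z) * exp (- beta * x / eps)).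
  { rewrite <- exp_plus. apply exp_le_exp.
    replace (- gam * z + - beta * x / eps) with (- (beta + gam) * z) by (unfold z; field; lra).
    replace (- (b0 - L * q) * x / eps) with (- (b0 - L * q) * z) by (unfold z; field; lra).
    nra. }
  pose proof (exp_pos (- (b0 - L * q) * x / eps)).
  apply Rle_trans with (K * (z^2 * (1 + bmax * z)^4 * exp (- gam * z)) * exp (- beta * x / eps)).
  - replace (K * (z^2 * (1 + bmax * z)^4 * exp (- gam * z)) * exp (- beta * x / eps))
      with (K * (z^2 * (1 + bmax * z)^4) * (exp (- gam * z) * exp (- beta * x / eps))) by ring.
    apply Rmult_le_compat_l; [apply Rmult_le_pos; lra|]. nra.
  - apply Rmult_le_compat_r; [left; apply exp_pos|].
    replace (bmax^2 * L^2 / 6 * poly_exp_const bmax gam * (q / eps)^2)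
      with (K * poly_exp_const bmax gam) by (unfold K; ring).
    apply Rmult_le_compat_l; [exact HK|apply poly_mul_exp_opp_bound; lra].
Qed.

Lemma tau_exp_split (eps b0 bi p q : R) : 0 < eps -> 0 < p -> 0 < q -> 0 < bi ->
  tau_exp eps b0 bi p q =
  - eps * bern (bi * q / eps) * (2 / (p + q))
      * ((exp (b0 / eps * p) - 1) / p - (1 - exp (- (b0 / eps * q))) / q)
  + bi * ((1 - exp (- (b0 / eps * q))) / q) + (b0 / eps) * (b0 - bi).
Proof. intros. unfold tau_exp. field. lra. Qed.

Lemma tau_exp_crude_bound (eps b0 bi p q bmax : R) :
  0 < eps -> 0 < p <= q -> 0 < b0 -> 0 < bi <= bmax ->
  Rabs (tau_exp eps b0 bi p q) <=
    2 * eps / q^2 + 2 * b0 * exp (b0 * p / eps) / q + bmax / q + b0 / eps * Rabs (bi - b0).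
Proof.
  intros He Hp Hb0 Hbi. rewrite tau_exp_split by lra.
  set (k := b0 / eps). set (G := k * p). set (A := k * q). set (S := bi * q / eps).
  assert (Hk : 0 < k) by (unfold k; apply Rdiv_lt_0_compat; lra).
  assert (HG : 0 < G) by (unfold G; apply Rmult_lt_0_compat; lra).
  assert (HA : 0 < A) by (unfold A; apply Rmult_lt_0_compat; lra).
  assert (HS : 0 < S) by (unfold S; apply Rdiv_lt_0_compat; [apply Rmult_lt_0_compat|]; lra).
  replace (b0 * p / eps) with G by (unfold G, k; field; lra).
  destruct (bern_bounds S HS) as [[HB0 HB1] _].
  pose proof (exp_pos (- A)). pose proof (exp_ineq1_le (- G)).
  pose proof (exp_mul_exp_opp G). pose proof (exp_pos G). pose proof (exp_ineq1_le G).
  assert (HeA1 : exp (- A) <= 1) by (apply exp_opp_le_1; lra).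
  assert (Hdiff : 0 <= (exp G - 1) / p <= k * exp G).
  { split; [apply Rdiv_le_0_compat; lra|].
    apply Rle_div_l; [lra|]. replace (k * exp G * p) with (G * exp G) by (unfold G; ring). nra. }
  assert (Hdiff2 : 0 <= (1 - exp (- A)) / q <= / q).
  { split; [apply Rdiv_le_0_compat; lra|].
    unfold Rdiv. rewrite <- (Rmult_1_l (/ q)) at 2.
    apply Rmult_le_compat_r; [left; apply Rinv_0_lt_compat|]; lra. }
  assert (HY : Rabs ((exp G - 1) / p - (1 - exp (- A)) / q) <= / q + k * exp G)
    by (apply Rabs_le; lra).
  assert (H2pq : 0 < 2 / (p + q) <= 2 / q).
  { split; [apply Rdiv_lt_0_compat; lra|]. unfold Rdiv.
    apply Rmult_le_compat_l; [lra|]. apply Rinv_le_contravar; lra. }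
  assert (Ht1 : Rabs (- eps * bern S * (2 / (p + q)) * ((exp G - 1) / p - (1 - exp (- A)) / q))
                <= 2 * eps / q ^ 2 + 2 * b0 * exp G / q).
  { rewrite !Rabs_mult, Rabs_Ropp, (Rabs_pos_eq eps), (Rabs_pos_eq (bern S)),
      (Rabs_pos_eq (2 / (p + q))) by lra.
    apply Rle_trans with (eps * 1 * (2 / q) * (/ q + k * exp G)).
    - apply Rmult_le_compat; [apply Rmult_le_pos; [apply Rmult_le_pos|]; lra|apply Rabs_pos| |exact HY].
      apply Rmult_le_compat; [apply Rmult_le_pos; lra|lra| |lra].
      apply Rmult_le_compat_l; lra.
    - right. unfold k. field. lra. }
  assert (Ht2 : Rabs (bi * ((1 - exp (- A)) / q)) <= bmax / q).
  { rewrite Rabs_mult, !Rabs_pos_eq by lra. unfold Rdiv at 2.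
    apply Rmult_le_compat; lra. }
  assert (Ht3 : Rabs (k * (b0 - bi)) = b0 / eps * Rabs (bi - b0)).
  { rewrite Rabs_mult, Rabs_pos_eq, <- Rabs_Ropp by lra. f_equal. f_equal. ring. }
  eapply Rle_trans; [apply Rabs_triang|]. rewrite Ht3.
  eapply Rle_trans; [apply Rplus_le_compat_r, Rabs_triang|]. unfold k in *. lra.
Qed.

Definition phi (G : R) := (exp G - 1) / G.
Definition psi (A : R) := (1 - exp (- A)) / A.

Lemma phi_bounds G : 0 < G -> 0 <= phi G - 1 - G / 2 <= G^2 * exp G / 6.
Proof.
  intros HG. pose proof (exp_ge_taylor2 G (Rlt_le _ _ HG)).
  pose proof (exp_le_taylor2_rem G (Rlt_le _ _ HG)).
  replace (phi G - 1 - G / 2) with ((exp G - 1 - G - G^2/2) / G) by (unfold phi; field; lra).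
  split; [apply Rdiv_le_0_compat; lra|]. apply Rle_div_l; [lra|]. simpl in *. nra.
Qed.

Lemma psi_bounds A : 0 < A -> 0 <= psi A - 1 + A / 2 <= A^2 / 6 /\ psi A <= 1.
Proof.
  intros HA. pose proof (exp_opp_le_taylor2 A (Rlt_le _ _ HA)).
  pose proof (exp_opp_ge_taylor3 A (Rlt_le _ _ HA)). pose proof (exp_ineq1_le (- A)).
  replace (psi A - 1 + A / 2) with ((1 - exp (- A) - A + A^2/2) / A) by (unfold psi; field; lra).
  split; [split|].
  - apply Rdiv_le_0_compat; lra.
  - apply Rle_div_l; [|lra]. simpl in *. nra.
  - unfold psi. apply Rle_div_l; lra.
Qed.

Lemma psi_mul_phi A : 0 < A -> Rabs (psi A * phi A - 1) <= A * exp A / 6.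
Proof.
  intros HA. destruct (wcosh_bounds A (Rlt_le _ _ HA)) as [W1 W2].
  assert (HA2 : 0 < A^2) by (apply pow_lt; lra).
  replace (psi A * phi A - 1) with ((wcosh A - A^2) / A^2).
  2:{ unfold psi, phi, wcosh. pose proof (exp_pos A). rewrite exp_Ropp. field. lra. }
  pose proof (exp_ineq1_le A).
  apply Rabs_le. split.
  - apply (Rle_div_r _ _ _ HA2). simpl in *. nra.
  - apply (Rle_div_l _ _ _ HA2). simpl in *. nra.
Qed.

Lemma phi_sub_psi_bound G A Amax : 0 < G <= A -> A <= Amax ->
  Rabs (phi G - psi A) <= (G + A) * (1 + Amax * exp Amax).
Proof.
  intros HG HA.
  destruct (phi_bounds G ltac:(lra)) as [PG1 PG2].
  destruct (psi_bounds A ltac:(lra)) as [[PS1 PS2] PS3].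
  pose proof (exp_pos G). pose proof (exp_le_exp G Amax ltac:(lra)).
  assert (G^2 * exp G <= G * (Amax * exp Amax)).
  { replace (G^2 * exp G) with (G * (G * exp G)) by ring.
    apply Rmult_le_compat_l; [lra|]. apply Rmult_le_compat; lra. }
  assert (0 <= G^2 * exp G) by (apply Rmult_le_pos; [apply pow2_ge_0|lra]).
  assert (0 <= A * (Amax * exp Amax)) by (apply Rmult_le_pos; [|apply Rmult_le_pos]; lra).
  apply Rabs_le. split; nra.
Qed.

Section TransitionNode.
Variables (eps b0 p q Amax : R).
Hypotheses (Heps : 0 < eps) (Hpq : 0 < p <= q) (Hb0 : 0 < b0) (HAmax : b0 * q / eps <= Amax).
Let k := b0 / eps.
Let G := k * p.
Let A := k * q.

Let k_pos : 0 < k. Proof. unfold k; apply Rdiv_lt_0_compat; lra. Qed.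
Let G_pos : 0 < G <= A. Proof. unfold G, A. split; [|apply Rmult_le_compat_l]; nra. Qed.
Let A_le : A <= Amax. Proof. unfold A, k. replace (b0 / eps * q) with (b0 * q / eps) by (field; lra). lra. Qed.

Let diff_quot_phi_psi :
  (exp (k * p) - 1) / p - (1 - exp (- (k * q))) / q = k * (phi G - psi A).
Proof. unfold phi, psi, G, A. field. repeat split; nra. Qed.

Let diff_quot_psi : (1 - exp (- (k * q))) / q = k * psi A.
Proof. unfold psi, A. field. split; nra. Qed.

Lemma tau_exp_sub_bound bi : 0 < bi ->
  Rabs (tau_exp eps b0 bi p q - tau_exp eps b0 b0 p q)
    <= Rabs (bi - b0) * k^2 * q * (2 + Amax * exp Amax).
Proof.
  intros Hbi. rewrite !tau_exp_split by lra. fold k.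
  rewrite diff_quot_phi_psi, diff_quot_psi.
  set (S := bi * q / eps).
  assert (HS : 0 < S) by (unfold S; apply Rdiv_lt_0_compat; [apply Rmult_lt_0_compat|]; lra).
  assert (HA : b0 * q / eps = A) by (unfold A, k; field; lra).
  rewrite HA.
  assert (HSA : Rabs (S - A) = Rabs (bi - b0) * (q / eps)).
  { replace (S - A) with ((bi - b0) * (q / eps)) by (unfold S, A, k; field; lra).
    rewrite Rabs_mult, (Rabs_pos_eq (q / eps)); auto. left; apply Rdiv_lt_0_compat; lra. }
  pose proof (bern_lipschitz S A HS ltac:(lra)) as HBL.
  pose proof (phi_sub_psi_bound G A Amax G_pos A_le) as HY.
  destruct (psi_bounds A ltac:(lra)) as [[PS1 PS2] PS3].
  set (cY := 1 + Amax * exp Amax).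
  replace (- eps * bern S * (2 / (p + q)) * (k * (phi G - psi A)) + bi * (k * psi A) + k * (b0 - bi)
           - (- eps * bern A * (2 / (p + q)) * (k * (phi G - psi A)) + b0 * (k * psi A) + k * (b0 - b0)))
    with (- eps * (bern S - bern A) * (2 / (p + q)) * (k * (phi G - psi A))
          - (bi - b0) * (k * (1 - psi A))) by ring.
  assert (Ha : Rabs (- eps * (bern S - bern A) * (2 / (p + q)) * (k * (phi G - psi A)))
               <= Rabs (bi - b0) * k^2 * q * cY).
  { rewrite !Rabs_mult, Rabs_Ropp, (Rabs_pos_eq eps), (Rabs_pos_eq (2 / (p + q))),
      (Rabs_pos_eq k) by (try (left; apply Rdiv_lt_0_compat); lra).
    apply Rle_trans with
      (eps * (/ 2 * (Rabs (bi - b0) * (q / eps))) * (2 / (p + q)) * (k * ((G + A) * cY))).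
    { rewrite <- HSA. assert (0 < 2 / (p + q)) by (apply Rdiv_lt_0_compat; lra).
      apply Rmult_le_compat; [apply Rmult_le_pos; [apply Rmult_le_pos; [lra|apply Rabs_pos]|lra]
                             |apply Rmult_le_pos; [lra|apply Rabs_pos]| |].
      - apply Rmult_le_compat_r; [lra|]. apply Rmult_le_compat_l; lra.
      - apply Rmult_le_compat_l; [lra|exact HY]. }
    right. unfold G, A. field. lra. }
  assert (Hb : Rabs ((bi - b0) * (k * (1 - psi A))) <= Rabs (bi - b0) * k^2 * q).
  { rewrite Rabs_mult, (Rabs_pos_eq (k * (1 - psi A))) by (apply Rmult_le_pos; lra).
    replace (Rabs (bi - b0) * k ^ 2 * q) with (Rabs (bi - b0) * (k * A)) by (unfold A; ring).
    apply Rmult_le_compat_l; [apply Rabs_pos|]. apply Rmult_le_compat_l; lra. }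
  eapply Rle_trans; [apply Rabs_triang|]. rewrite Rabs_Ropp.
  replace (Rabs (bi - b0) * k ^ 2 * q * (2 + Amax * exp Amax))
    with (Rabs (bi - b0) * k ^ 2 * q * cY + Rabs (bi - b0) * k ^ 2 * q) by (unfold cY; ring).
  lra.
Qed.

(* With the exact coefficient [bi = b0] all terms up to first order in [A]
   cancel; [Zp] collects the second-order remainders of [phi] and [psi]. *)
Lemma tau_exp_exact_coeff_bound :
  Rabs (tau_exp eps b0 b0 p q) <= b0 * k^2 * q * (exp Amax + 1).
Proof.
  rewrite tau_exp_split by lra. fold k.
  rewrite diff_quot_phi_psi, diff_quot_psi.
  replace (b0 * q / eps) with A by (unfold A, k; field; lra).
  destruct (phi_bounds G ltac:(lra)) as [PG1 PG2].
  destruct (phi_bounds A ltac:(lra)) as [PA1 PA2].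
  destruct (psi_bounds A ltac:(lra)) as [[PS1 PS2] PS3].
  pose proof (psi_mul_phi A ltac:(lra)) as PP.
  pose proof (exp_le_exp G Amax ltac:(lra)). pose proof (exp_le_exp A Amax ltac:(lra)).
  pose proof (exp_pos G). pose proof (exp_pos A). pose proof (expm1_pos A ltac:(lra)).
  set (Zp := (G + A) * psi A * phi A - 2 * phi G + 2 * psi A).
  assert (HT0e : - eps * bern A * (2 / (p + q)) * (k * (phi G - psi A)) + b0 * (k * psi A)
                   + k * (b0 - b0) = b0 * k * Zp / ((G + A) * phi A)).
  { unfold Zp, bern, phi, psi, G, A, k in *. field. repeat split; try lra; nra. }
  rewrite HT0e.
  assert (HZ : Rabs Zp <= A^2 * (exp Amax + 1)).
  { replace Zp with ((G + A) * (psi A * phi A - 1) + 2 * (psi A - 1 + A / 2)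
                     - 2 * (phi G - 1 - G / 2)) by (unfold Zp; field).
    assert (HZ1 : Rabs ((G + A) * (psi A * phi A - 1)) <= A^2 * exp Amax / 3).
    { rewrite Rabs_mult, Rabs_pos_eq by lra.
      apply Rle_trans with (2 * A * (A * exp Amax / 6)); [|right; field].
      apply Rmult_le_compat; try lra; try apply Rabs_pos.
      apply Rle_trans with (1 := PP). apply Rmult_le_compat_r; [lra|].
      apply Rmult_le_compat_l; lra. }
    assert (G^2 * exp G / 6 <= A^2 * exp Amax / 6).
    { apply Rmult_le_compat_r; [lra|].
      apply Rmult_le_compat; [apply pow2_ge_0|lra| |lra]. apply pow_incr; lra. }
    assert (0 <= A^2 * exp Amax) by (apply Rmult_le_pos; [apply pow2_ge_0|lra]).
    unfold Rminus at 1. eapply Rle_trans; [apply Rabs_triang|].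
    eapply Rle_trans; [apply Rplus_le_compat_r, Rabs_triang|].
    rewrite Rabs_Ropp, (Rabs_pos_eq (2 * _)), (Rabs_pos_eq (2 * (phi G - 1 - G / 2))) by lra.
    lra. }
  unfold Rdiv. rewrite !Rabs_mult, Rabs_inv by (apply Rgt_not_eq, Rmult_lt_0_compat; lra).
  rewrite (Rabs_pos_eq b0), (Rabs_pos_eq k) by lra.
  rewrite (Rabs_pos_eq ((G + A) * phi A)) by (apply Rmult_le_pos; lra).
  apply Rle_trans with (b0 * k * (A^2 * (exp Amax + 1)) * / A).
  - apply Rmult_le_compat; [apply Rmult_le_pos; [apply Rmult_le_pos|apply Rabs_pos]; lra
                           |left; apply Rinv_0_lt_compat, Rmult_lt_0_compat; lra| |].
    + apply Rmult_le_compat_l; [apply Rmult_le_pos|]; lra.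
    + apply Rinv_le_contravar; [lra|].
      assert (A * 1 <= (G + A) * phi A) by (apply Rmult_le_compat; lra). lra.
  - right. unfold A. field. lra.
Qed.

Lemma tau_exp_taylor_bound bi : 0 < bi ->
  Rabs (tau_exp eps b0 bi p q)
    <= b0^2 * q / eps^2 * (Rabs (bi - b0) * (2 + Amax * exp Amax) + b0 * (exp Amax + 1)).
Proof.
  intros Hbi.
  replace (tau_exp eps b0 bi p q)
    with ((tau_exp eps b0 bi p q - tau_exp eps b0 b0 p q) + tau_exp eps b0 b0 p q) by ring.
  eapply Rle_trans; [apply Rabs_triang|].
  pose proof (tau_exp_sub_bound bi Hbi). pose proof tau_exp_exact_coeff_bound.
  replace (b0^2 * q / eps^2 * (Rabs (bi - b0) * (2 + Amax * exp Amax) + b0 * (exp Amax + 1)))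
    with (Rabs (bi - b0) * k^2 * q * (2 + Amax * exp Amax) + b0 * k^2 * q * (exp Amax + 1))
    by (unfold k; field; lra).
  lra.
Qed.

End TransitionNode.

(** * Maximum principle and the amplitude of the layer *)

Lemma derive_zero_at_interior_min (w dw : R -> R) m :
  0 < m < 1 -> (forall y, 0 <= y <= 1 -> w m <= w y) ->
  is_derive w m (dw m) -> dw m = 0.
Proof.
  intros Hm Hmin Hd.
  assert (pr : derivable_pt w m) by (exists (dw m); now apply is_derive_Reals).
  rewrite <- (deriv_minimum w 0 1 m pr (proj1 Hm) (proj2 Hm)).
  2:{ intros y Hy1 Hy2. apply Hmin. lra. }
  destruct pr as [l Hl]. simpl. apply (uniqueness_limite w m); auto.
  now apply is_derive_Reals.
Qed.

Lemma derive2_nonneg_at_interior_min (w dw : R -> R) d2wm m :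
  0 < m < 1 -> (forall y, 0 <= y <= 1 -> w m <= w y) ->
  (forall y, 0 <= y <= 1 -> is_derive w y (dw y)) -> dw m = 0 ->
  is_derive dw m d2wm -> 0 <= d2wm.
Proof.
  intros Hm Hmin Hd Hdm Hd2.
  destruct (Rle_lt_dec 0 d2wm) as [|Hn]; auto. exfalso.
  apply is_derive_Reals in Hd2.
  destruct (Hd2 (- d2wm / 2)) as [del Hdel]; [lra|].
  set (h0 := Rmin (del / 2) ((1 - m) / 2)).
  assert (Hh0 : 0 < h0 < del /\ m + h0 <= 1).
  { unfold h0, Rmin. destruct (Rle_dec (del / 2) ((1 - m) / 2)); pose proof (cond_pos del); lra. }
  destruct (MVT_cor2 w dw m (m + h0)) as [c [Hc1 Hc2]]; [lra| |].
  { intros c Hc'. apply is_derive_Reals, Hd. lra. }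
  assert (Hdc : dw c < 0).
  { specialize (Hdel (c - m)). replace (m + (c - m)) with c in Hdel by ring.
    rewrite Hdm, Rminus_0_r in Hdel.
    destruct (Rabs_def2 _ _ (Hdel ltac:(lra) ltac:(rewrite Rabs_pos_eq; lra))) as [Hd1 _].
    destruct (Rle_lt_dec 0 (dw c)); auto.
    assert (0 <= dw c / (c - m)) by (apply Rdiv_le_0_compat; lra). lra. }
  specialize (Hmin (m + h0) ltac:(lra)). nra.
Qed.

Lemma min_principle (eps : R) (w dw d2w bb cc : R -> R) :
  0 < eps ->
  (forall x, 0 <= x <= 1 -> is_derive w x (dw x)) ->
  (forall x, 0 < x < 1 -> is_derive dw x (d2w x)) ->
  (forall x, 0 < x < 1 -> 0 <= cc x) ->
  (forall x, 0 < x < 1 -> 0 < - eps * d2w x - bb x * dw x + cc x * w x) ->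
  0 <= w 0 -> 0 <= w 1 -> forall x, 0 <= x <= 1 -> 0 <= w x.
Proof.
  intros He Hd Hd2 Hc HL H0 H1 x Hx.
  destruct (Rle_lt_dec 0 (w x)) as [|Hneg]; auto. exfalso.
  destruct (continuity_ab_min w 0 1) as [m [Hm Hm01]]; [lra| |].
  { intros c Hc'. apply (is_derive_continuity_pt _ _ (dw c)), Hd; auto. }
  assert (Hwm : w m < 0) by (specialize (Hm x Hx); lra).
  assert (Hm0 : 0 < m < 1).
  { split; destruct (Req_dec m 0); destruct (Req_dec m 1); subst; lra. }
  assert (Hdm : dw m = 0) by (apply (derive_zero_at_interior_min w dw m Hm0 Hm), Hd; lra).
  pose proof (derive2_nonneg_at_interior_min w dw (d2w m) m Hm0 Hm Hd Hdm (Hd2 m Hm0)).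
  specialize (HL m Hm0). specialize (Hc m Hm0). rewrite Hdm in HL. nra.
Qed.

Lemma derive_nonneg_at_0 (w : R -> R) l :
  w 0 = 0 -> (forall x, 0 <= x <= 1 -> 0 <= w x) -> is_derive w 0 l -> 0 <= l.
Proof.
  intros H0 Hp Hd. apply is_derive_Reals in Hd.
  destruct (Rle_lt_dec 0 l) as [|Hn]; auto. exfalso.
  destruct (Hd (- l / 2)) as [del Hdel]; [lra|].
  set (h := Rmin (del / 2) (1 / 2)).
  assert (0 < h < del /\ h <= 1)
    by (unfold h, Rmin; destruct (Rle_dec (del / 2) (1 / 2)); pose proof (cond_pos del); lra).
  specialize (Hdel h ltac:(lra) ltac:(rewrite Rabs_pos_eq; lra)).
  rewrite Rplus_0_l, H0, Rminus_0_r in Hdel. apply Rabs_def2 in Hdel.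
  assert (0 <= w h / h) by (apply Rdiv_le_0_compat; [apply Hp|]; lra). lra.
Qed.

Section LayerAmplitude.
Variables (eps beta Mb Mc Mf : R) (b c f u : R -> R).
Hypotheses (Heps : 0 < eps < 1) (Hbeta : 0 < beta)
  (Hb : forall x, 0 <= x <= 1 -> beta < b x <= Mb)
  (Hc : forall x, 0 <= x <= 1 -> 0 <= c x <= Mc)
  (Hf : forall x, 0 <= x <= 1 -> Rabs (f x) <= Mf)
  (Hsol : is_bvp_solution eps b c f u).

Let u_derive x : 0 <= x <= 1 -> is_derive u x (Derive u x).
Proof.
  intros Hx. destruct Hsol as [[d [Hd Hu]] _].
  apply Derive_correct, (Hu x). lra.
Qed.

Let u_derive2 x : 0 <= x <= 1 -> is_derive (Derive u) x (Derive_n u 2 x).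
Proof.
  intros Hx. destruct Hsol as [[d [Hd Hu]] _].
  apply Derive_correct. exact (proj2 (Hu x ltac:(lra))).
Qed.

Let u_ode x : 0 < x < 1 -> - eps * Derive_n u 2 x - b x * Derive u x + c x * u x = f x.
Proof. destruct Hsol as [_ [Hode _]]. apply Hode. Qed.

Let barrier_derive (s : R) (g dg d2g : R -> R) :
  (forall x, is_derive g x (dg x)) -> (forall x, is_derive dg x (d2g x)) ->
  (forall x, 0 <= x <= 1 -> is_derive (fun x => g x + s * u x) x (dg x + s * Derive u x)) /\
  (forall x, 0 < x < 1 ->
     is_derive (fun x => dg x + s * Derive u x) x (d2g x + s * Derive_n u 2 x)).
Proof.
  intros Hg Hdg. split; intros x Hx.
  - apply (is_derive_plus g (fun x => s * u x)); [auto|].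
    apply is_derive_scal, u_derive. lra.
  - apply (is_derive_plus dg (fun x => s * Derive u x)); [auto|].
    apply is_derive_scal, u_derive2. lra.
Qed.

Lemma bvp_solution_abs_le x : 0 <= x <= 1 -> Rabs (u x) <= Mf / beta + 1.
Proof.
  set (kap := Mf / beta + 1).
  assert (Hkap : 0 < kap).
  { assert (0 <= Mf) by (pose proof (Hf 0 ltac:(lra)); pose proof (Rabs_pos (f 0)); lra).
    unfold kap. assert (0 <= Mf / beta) by (apply Rdiv_le_0_compat; lra). lra. }
  assert (Hw : forall s, s = 1 \/ s = -1 -> forall x, 0 <= x <= 1 -> 0 <= kap * (1 - x) + s * u x).
  { intros s Hs.
    destruct (barrier_derive s (fun x => kap * (1 - x)) (fun _ => - kap) (fun _ => 0))
      as [Hd1 Hd2]; [intros y; auto_derive; auto; ring|intros y; auto_derive; auto|].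
    apply (min_principle eps _ _ _ b c (proj1 Heps) Hd1 Hd2).
    - intros y Hy. apply Hc. lra.
    - intros y Hy. pose proof (u_ode y Hy) as Hode.
      pose proof (Hf y ltac:(lra)). pose proof (Hb y ltac:(lra)). pose proof (Hc y ltac:(lra)).
      replace (- eps * (0 + s * Derive_n u 2 y) - b y * (- kap + s * Derive u y)
               + c y * (kap * (1 - y) + s * u y))
        with (b y * kap + c y * kap * (1 - y) + s * f y) by (rewrite <- Hode; ring).
      assert (- Mf <= s * f y) by (apply Rabs_le_between in H; destruct Hs; subst; lra).
      assert (0 <= c y * kap * (1 - y)) by (apply Rmult_le_pos; [apply Rmult_le_pos|]; lra).
      assert (beta * kap = Mf + beta) by (unfold kap; field; lra).
      assert (beta * kap < b y * kap) by (apply Rmult_lt_compat_r; lra).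
      lra.
    - destruct Hsol as [_ [_ [Hu0 _]]]. rewrite Hu0. lra.
    - destruct Hsol as [_ [_ [_ Hu1]]]. rewrite Hu1. lra. }
  intros Hx. pose proof (Hw 1 (or_introl eq_refl) x Hx). pose proof (Hw (-1) (or_intror eq_refl) x Hx).
  assert (0 <= kap * x) by (apply Rmult_le_pos; lra). apply Rabs_le. lra.
Qed.

Lemma barrier_slope_at_0 gam Ap Kp s : s = 1 \/ s = -1 ->
  Mb <= gam -> 0 < Ap -> 0 < Kp -> Mc * (Mf / beta + 1) + Mf < beta * Kp ->
  Kp <= Ap * (1 - exp (- gam)) ->
  0 <= Ap * (gam / eps) - Kp + s * Derive u 0.
Proof.
  intros Hs Hgam HAp HKp HKpb HApKp.
  set (kap := Mf / beta + 1) in *.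
  assert (Hgam0 : 0 < gam) by (pose proof (Hb 0 ltac:(lra)); lra).
  set (g := fun x => Ap * (1 - exp (- (gam / eps) * x)) - Kp * x).
  set (dg := fun x => Ap * (gam / eps) * exp (- (gam / eps) * x) - Kp).
  set (d2g := fun x => - (Ap * (gam / eps)^2 * exp (- (gam / eps) * x))).
  destruct (barrier_derive s g dg d2g) as [Hd1 Hd2];
    [intros y; unfold g, dg; auto_derive; auto; field; lra
    |intros y; unfold dg, d2g; auto_derive; auto; field; lra|].
  assert (Hg0 : g 0 + s * u 0 = 0).
  { destruct Hsol as [_ [_ [Hu0 _]]]. unfold g. rewrite Hu0, Rmult_0_r, exp_0. ring. }
  replace (Ap * (gam / eps) - Kp) with (dg 0) by (unfold dg; rewrite Rmult_0_r, exp_0; ring).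
  apply (derive_nonneg_at_0 (fun x => g x + s * u x)); [exact Hg0| |apply Hd1; lra].
  apply (min_principle eps _ _ _ b (fun _ => 0) (proj1 Heps) Hd1 Hd2); [intros; lra| | |].
  - intros y Hy. pose proof (u_ode y Hy) as Hode. unfold g, dg, d2g.
    pose proof (Hf y ltac:(lra)). pose proof (Hb y ltac:(lra)). pose proof (Hc y ltac:(lra)).
    pose proof (bvp_solution_abs_le y ltac:(lra)). fold kap in H2.
    assert (Hcu : Rabs (c y * u y) <= Mc * kap).
    { rewrite Rabs_mult. apply Rmult_le_compat; try apply Rabs_pos; auto.
      rewrite Rabs_pos_eq; lra. }
    replace (- eps * (- (Ap * (gam / eps) ^ 2 * exp (- (gam / eps) * y)) + s * Derive_n u 2 y)
             - b y * (Ap * (gam / eps) * exp (- (gam / eps) * y) - Kp + s * Derive u y)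
             + 0 * (Ap * (1 - exp (- (gam / eps) * y)) - Kp * y + s * u y))
      with (Ap * (gam / eps) * exp (- (gam / eps) * y) * (gam - b y) + b y * Kp
            + s * (f y - c y * u y)) by (rewrite <- Hode; field; lra).
    assert (0 <= Ap * (gam / eps) * exp (- (gam / eps) * y) * (gam - b y)).
    { apply Rmult_le_pos; [|lra]. apply Rmult_le_pos; [|left; apply exp_pos].
      apply Rmult_le_pos; [lra|]. apply Rdiv_le_0_compat; lra. }
    assert (- (Mf + Mc * kap) <= s * (f y - c y * u y)).
    { assert (Habs : Rabs (f y - c y * u y) <= Mf + Mc * kap)
        by (eapply Rle_trans; [apply Rabs_triang|]; rewrite Rabs_Ropp; lra).
      apply Rabs_le_between in Habs. destruct Hs; subst; lra. }
    assert (beta * Kp < b y * Kp) by (apply Rmult_lt_compat_r; lra).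
    lra.
  - rewrite Hg0. lra.
  - destruct Hsol as [_ [_ [_ Hu1]]]. unfold g. rewrite Hu1.
    assert (exp (- (gam / eps) * 1) <= exp (- gam)).
    { apply exp_le_exp. rewrite Rmult_1_r.
      apply Ropp_le_contravar, (Rle_div_r _ _ _ (proj1 Heps)).
      assert (gam * eps <= gam * 1) by (apply Rmult_le_compat_l; lra). lra. }
    assert (Ap * exp (- (gam / eps) * 1) <= Ap * exp (- gam)) by (apply Rmult_le_compat_l; lra).
    lra.
Qed.

Lemma bvp_solution_eps_derive0_le :
  Rabs (eps * Derive u 0)
    <= (Mc * (Mf / beta + 1) + Mf + 1) / beta / (1 - exp (- (Mb + 1))) * (Mb + 1).
Proof.
  set (gam := Mb + 1). set (Kp := (Mc * (Mf / beta + 1) + Mf + 1) / beta).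
  set (Ap := Kp / (1 - exp (- gam))).
  assert (HMb : beta < Mb) by (pose proof (Hb 0 ltac:(lra)); lra).
  assert (HMc : 0 <= Mc) by (pose proof (Hc 0 ltac:(lra)); lra).
  assert (HMf : 0 <= Mf) by (pose proof (Hf 0 ltac:(lra)); pose proof (Rabs_pos (f 0)); lra).
  assert (HKp : 0 < Kp).
  { unfold Kp. assert (0 <= Mf / beta) by (apply Rdiv_le_0_compat; lra).
    apply Rdiv_lt_0_compat; nra. }
  assert (He1 : 0 < 1 - exp (- gam))
    by (pose proof (exp_increasing (- gam) 0); rewrite exp_0 in *; unfold gam in *; lra).
  assert (HAp : 0 < Ap) by (unfold Ap; apply Rdiv_lt_0_compat; lra).
  assert (HKpb : Mc * (Mf / beta + 1) + Mf < beta * Kp) 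
    by (replace (beta * Kp) with (Mc * (Mf / beta + 1) + Mf + 1) by (unfold Kp; field; lra); lra).
  assert (HApKp : Kp <= Ap * (1 - exp (- gam))) by (unfold Ap; right; field; lra).
  pose proof (barrier_slope_at_0 gam Ap Kp 1 (or_introl eq_refl)).
  pose proof (barrier_slope_at_0 gam Ap Kp (-1) (or_intror eq_refl)).
  rewrite Rabs_mult, (Rabs_pos_eq eps) by lra.
  apply Rle_trans with (eps * (Ap * (gam / eps))).
  - apply Rmult_le_compat_l; [lra|]. apply Rabs_le. unfold gam in *. lra.
  - right. unfold Ap. field. lra.
Qed.

End LayerAmplitude.

Lemma C4_01_derivable g : C4_01 g ->
  forall x, 0 <= x <= 1 -> ex_derive g x /\ ex_derive (Derive g) x.
Proof.
  intros [d [Hd H]] x Hx. destruct (H x ltac:(lra)) as [H1 _].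
  exact (conj (H1 1%nat ltac:(lia)) (H1 2%nat ltac:(lia))).
Qed.

Lemma C4_01_continuous g : C4_01 g -> forall x, 0 <= x <= 1 -> continuity_pt g x.
Proof.
  intros Hg x Hx. apply continuity_pt_filterlim, (ex_derive_continuous g x).
  exact (proj1 (C4_01_derivable g Hg x Hx)).
Qed.

Lemma C4_01_derive_continuous g : C4_01 g -> forall x, 0 <= x <= 1 -> continuity_pt (Derive g) x.
Proof.
  intros Hg x Hx. apply continuity_pt_filterlim, (ex_derive_continuous (Derive g) x).
  exact (proj2 (C4_01_derivable g Hg x Hx)).
Qed.

Lemma continuous_abs_bounded_01 g : (forall x, 0 <= x <= 1 -> continuity_pt g x) ->
  exists M, 0 <= M /\ forall x, 0 <= x <= 1 -> Rabs (g x) <= M.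
Proof.
  intros Hc.
  destruct (continuity_ab_maj g 0 1) as [M1 [H1 _]]; [lra|auto|].
  destruct (continuity_ab_maj (fun x => - g x) 0 1) as [M2 [H2 _]]; [lra| |].
  { intros c Hc'. apply continuity_pt_opp. auto. }
  exists (Rmax 0 (Rmax (g M1) (- g M2))). split; [apply Rmax_l|].
  intros x Hx. specialize (H1 x Hx). specialize (H2 x Hx).
  pose proof (Rmax_r 0 (Rmax (g M1) (- g M2))).
  pose proof (Rmax_l (g M1) (- g M2)). pose proof (Rmax_r (g M1) (- g M2)).
  apply Rabs_le. lra.
Qed.

Lemma continuous_min_gt_01 g beta : (forall x, 0 <= x <= 1 -> continuity_pt g x) ->
  (forall x, 0 <= x <= 1 -> beta < g x) ->
  exists m, beta < m /\ forall x, 0 <= x <= 1 -> m <= g x.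
Proof.
  intros Hc Hb. destruct (continuity_ab_min g 0 1) as [m [H1 H2]]; [lra|auto|].
  exists (g m). auto.
Qed.

Lemma C4_01_lipschitz_at_0 g : C4_01 g ->
  exists L, 0 <= L /\ forall x, 0 <= x <= 1 -> Rabs (g x - g 0) <= L * x.
Proof.
  intros Hg.
  destruct (continuous_abs_bounded_01 (Derive g) (C4_01_derive_continuous g Hg)) as [L [HL H]].
  exists L. split; auto. intros x Hx.
  replace (L * x) with (L * Rabs (x - 0)) by (rewrite Rminus_0_r, Rabs_pos_eq; lra).
  apply (abs_sub_le_mvt g (Derive g)); unfold Rmin, Rmax; destruct (Rle_dec 0 x); try lra;
    intros c Hc.
  - apply Derive_correct, (C4_01_derivable g Hg). lra.
  - apply H. lra.
Qed.

Lemma vlayer_amplitude_bound (b c f : R -> R) (beta : R) :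
  C4_01 b -> C4_01 c -> C4_01 f -> 0 < beta ->
  (forall x, 0 <= x <= 1 -> beta < b x) -> (forall x, 0 <= x <= 1 -> 0 <= c x) ->
  exists KK, 0 <= KK /\ forall eps u, 0 < eps < 1 -> is_bvp_solution eps b c f u ->
    Rabs (eps * Derive u 0 / b 0) <= KK.
Proof.
  intros Hb Hc Hf Hbeta Hbb Hcc.
  destruct (continuous_abs_bounded_01 b (C4_01_continuous b Hb)) as [Mb [HMb0 HMb]].
  destruct (continuous_abs_bounded_01 c (C4_01_continuous c Hc)) as [Mc [HMc0 HMc]].
  destruct (continuous_abs_bounded_01 f (C4_01_continuous f Hf)) as [Mf [HMf0 HMf]].
  set (CK := (Mc * (Mf / beta + 1) + Mf + 1) / beta / (1 - exp (- (Mb + 1))) * (Mb + 1)).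
  assert (Hb' : forall x, 0 <= x <= 1 -> beta < b x <= Mb).
  { intros x Hx. specialize (Hbb x Hx). specialize (HMb x Hx). apply Rabs_le_between in HMb. lra. }
  assert (Hc' : forall x, 0 <= x <= 1 -> 0 <= c x <= Mc).
  { intros x Hx. specialize (Hcc x Hx). specialize (HMc x Hx). apply Rabs_le_between in HMc. lra. }
  assert (HCK : forall eps u, 0 < eps < 1 -> is_bvp_solution eps b c f u ->
                  Rabs (eps * Derive u 0) <= CK).
  { intros eps u He Hsol. exact (bvp_solution_eps_derive0_le eps beta Mb Mc Mf b c f u
                                   He Hbeta Hb' Hc' HMf Hsol). }
  assert (HCK0 : 0 <= CK).
  { pose proof (exp_opp_le_1 (Mb + 1) ltac:(lra)).
    pose proof (exp_increasing (- (Mb + 1)) 0 ltac:(lra)). rewrite exp_0 in *.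
    unfold CK. apply Rmult_le_pos; [|lra]. apply Rdiv_le_0_compat; [|lra].
    apply Rdiv_le_0_compat; [|lra].
    assert (0 <= Mf / beta) by (apply Rdiv_le_0_compat; lra). nra. }
  exists (CK / beta). split; [apply Rdiv_le_0_compat; lra|].
  intros eps u He Hsol. pose proof (Hb' 0 ltac:(lra)).
  unfold Rdiv. rewrite Rabs_mult, Rabs_inv, (Rabs_pos_eq (b 0)) by lra.
  apply Rmult_le_compat; [apply Rabs_pos|left; apply Rinv_0_lt_compat; lra|now apply HCK|].
  apply Rinv_le_contravar; lra.
Qed.

Lemma mesh_fine eps a beta lam N J i : (i <= J)%nat ->
  mesh eps a beta lam N J i = INR i * (xi_mesh eps a beta lam / INR J).
Proof. intros Hi. unfold mesh. cbv zeta. apply Nat.leb_le in Hi. now rewrite Hi. Qed.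

Lemma mesh_coarse eps a beta lam N J i : (J <= i)%nat -> INR J <> 0 ->
  mesh eps a beta lam N J i =
    xi_mesh eps a beta lam + (INR i - INR J) * ((1 - xi_mesh eps a beta lam) / (INR N - INR J)).
Proof.
  intros Hi HJ. unfold mesh. cbv zeta. destruct (i <=? J) eqn:E; [|reflexivity].
  apply Nat.leb_le in E. replace i with J by lia.
  rewrite Rminus_diag_eq, Rmult_0_l, Rplus_0_r by auto. field. auto.
Qed.

Section LayerMesh.
Variables (b : R -> R) (beta Q a bmin bmax L eps : R) (N J : nat).
Hypotheses (Hbeta : 0 < beta) (Hbmin : beta < bmin)
  (Hb : forall y, 0 <= y <= 1 -> bmin <= b y <= bmax)
  (HL : 0 <= L) (Hlip : forall y, 0 <= y <= 1 -> Rabs (b y - b 0) <= L * y)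
  (HQ : 0 < Q < 1) (Ha : 2 <= a) (Heps : 0 < eps < 1)
  (HJ : INR J = Q * INR N) (Hxi : xi_mesh eps a beta (/ eps) <= Q)
  (HN : L / ((1 - Q) * ((bmin - beta) / 2)) + bmax / (Q * (bmin - beta)) + 1 <= INR N).
Variables (u : R -> R) (KK : R).
Hypothesis (HK : Rabs (eps * Derive u 0 / b 0) <= KK).

Let gam := (bmin - beta) / 2.
Let n := INR N.
Let xi := xi_mesh eps a beta (/ eps).
Let l := ln (/ eps).
Let h := xi / INR J.
Let H := (1 - xi) / (n - INR J).
Let R2 := Rpower eps (a - 2).
Let x := mesh eps a beta (/ eps) N J.

Let b_bounds y : 0 <= y <= 1 -> 0 < b y <= bmax.
Proof. intros Hy. pose proof (Hb y Hy). lra. Qed.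

Let n_ge_1 : 1 <= n.
Proof.
  pose proof (b_bounds 0 ltac:(lra)).
  assert (0 <= L / ((1 - Q) * gam)) by (apply Rdiv_le_0_compat; [|apply Rmult_lt_0_compat]; unfold gam; lra).
  assert (0 <= bmax / (Q * (bmin - beta))) by (apply Rdiv_le_0_compat; [|apply Rmult_lt_0_compat]; lra).
  unfold n, gam in *. lra.
Qed.

Let l_pos : 0 < l.
Proof.
  unfold l. rewrite <- ln_1. apply ln_increasing; [lra|].
  rewrite <- Rinv_1. apply Rinv_lt_contravar; lra.
Qed.

Let ln_eps : ln eps = - l.
Proof. unfold l. rewrite ln_Rinv by lra. ring. Qed.

Let xi_eq : xi = a * eps / beta * l.
Proof. reflexivity. Qed.

Let xi_pos : 0 < xi.
Proof. rewrite xi_eq. apply Rmult_lt_0_compat; auto. apply Rdiv_lt_0_compat; nra. Qed.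

Let xi_le : xi <= Q.
Proof. exact Hxi. Qed.

Let J_pos : 1 <= INR J.
Proof.
  apply (le_INR 1). destruct J; [|lia].
  simpl in HJ. pose proof n_ge_1. unfold n in *. nra.
Qed.

Let J_ge_1 : (1 <= J)%nat.
Proof. apply INR_le. simpl. exact J_pos. Qed.

Let N_sub_J : n - INR J = (1 - Q) * n.
Proof. unfold n. rewrite HJ. ring. Qed.

Let h_pos : 0 < h.
Proof. unfold h. apply Rdiv_lt_0_compat; lra. Qed.

Let h_mul_J : h * INR J = xi.
Proof. unfold h. field. lra. Qed.

Let H_bounds : / n <= H <= / ((1 - Q) * n).
Proof.
  assert (HQn : (1 - Q) * n > 0) by (apply Rmult_lt_0_compat; lra).
  unfold H. rewrite N_sub_J. split.
  - apply (Rle_div_r _ _ _ HQn). replace (/ n * ((1 - Q) * n)) with (1 - Q) by (field; lra). lra.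
  - apply (Rle_div_l _ _ _ HQn). replace (/ ((1 - Q) * n) * ((1 - Q) * n)) with 1 by (field; lra). lra.
Qed.

Let h_le_H : h <= H.
Proof.
  assert (HQn : Q * n > 0) by (apply Rmult_lt_0_compat; lra).
  unfold h, H. rewrite N_sub_J, HJ. fold n.
  apply (Rle_div_l _ _ _ HQn).
  replace ((1 - xi) / ((1 - Q) * n) * (Q * n)) with ((1 - xi) * Q / (1 - Q)) by (field; lra).
  apply (Rle_div_r _ _ (1 - Q) ltac:(lra)). nra.
Qed.

Let LH_le : L * H <= gam.
Proof.
  assert (Hg : 0 < (1 - Q) * gam) by (apply Rmult_lt_0_compat; unfold gam; lra).
  assert (L / ((1 - Q) * gam) <= n).
  { assert (0 <= bmax / (Q * (bmin - beta))).
    { pose proof (b_bounds 0 ltac:(lra)).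
      apply Rdiv_le_0_compat; [|apply Rmult_lt_0_compat]; lra. }
    unfold n, gam in *. lra. }
  assert (HQn : (1 - Q) * n > 0) by (apply Rmult_lt_0_compat; lra).
  apply Rle_trans with (L * / ((1 - Q) * n)); [apply Rmult_le_compat_l; lra|].
  apply (Rle_div_l _ _ _ HQn). apply (Rle_div_l _ _ _ Hg) in H0. nra.
Qed.

Let beta_le_b0_fine : beta <= b 0 * (1 - / INR J).
Proof.
  pose proof (b_bounds 0 ltac:(lra)). pose proof (Hb 0 ltac:(lra)).
  assert (HJb : bmax / (bmin - beta) <= INR J).
  { rewrite HJ. apply Rle_trans with (Q * (bmax / (Q * (bmin - beta)))).
    - right. field. split; lra.
    - apply Rmult_le_compat_l; [lra|]. fold n. pose proof n_ge_1.
      assert (0 <= L / ((1 - Q) * gam))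
        by (apply Rdiv_le_0_compat; [|apply Rmult_lt_0_compat]; unfold gam; lra).
      unfold n, gam in *. lra. }
  assert (b 0 / INR J <= bmin - beta).
  { apply (Rle_div_l _ _ (INR J) ltac:(lra)). apply Rle_trans with bmax; [lra|].
    apply (Rle_div_l _ _ (bmin - beta) ltac:(lra)) in HJb. lra. }
  unfold Rdiv in H1. lra.
Qed.

Let R2_pos : 0 < R2.
Proof. unfold R2, Rpower. apply exp_pos. Qed.

(* The transition point is placed so that the layer has decayed to [eps^a] there. *)
Let exp_beta_xi : exp (- beta * xi / eps) = R2 * eps ^ 2.
Proof.
  unfold R2. rewrite <- (Rpower_pow 2 eps), <- Rpower_plus by lra. unfold Rpower.
  f_equal. rewrite ln_eps, xi_eq. simpl. field. lra.
Qed.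

Let mesh_fine_at i : (i <= J)%nat -> x i = INR i * h.
Proof. intros Hi. now apply mesh_fine. Qed.

Let mesh_coarse_at i : (J <= i)%nat -> x i = xi + (INR i - INR J) * H.
Proof. intros Hi. apply mesh_coarse; [auto|lra]. Qed.

Let Cfine := KK * (bmax^2 * L^2 / 6 * poly_exp_const bmax gam * (a / (beta * Q))^2).

Lemma tau_vlayer_fine_bound i : (1 <= i <= J - 1)%nat ->
  Rabs (tau eps a beta (/ eps) N J b (vlayer eps b u) i) <=
    Cfine * ((ln eps)^2 * / n^2 * exp (- beta * x i / eps)).
Proof.
  intros Hi. unfold Cfine.
  assert (Xm : x (i - 1)%nat = INR i * h - h) by (rewrite mesh_fine_at, minus_INR by lia; simpl; ring).
  assert (Xp : x (S i) = INR i * h + h) by (rewrite mesh_fine_at, S_INR by lia; ring).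
  assert (Xi : x i = INR i * h) by (apply mesh_fine_at; lia).
  assert (Hi1 : 1 <= INR i) by (apply (le_INR 1); lia).
  assert (HiJ : INR i <= INR J) by (apply le_INR; lia).
  assert (Hxr : h <= INR i * h <= xi) by (rewrite <- h_mul_J; split; nra).
  pose proof (Hb 0 ltac:(lra)). pose proof (b_bounds (INR i * h) ltac:(lra)).
  rewrite tau_vlayer_node by (try lia; fold x; rewrite ?Xm, ?Xi, ?Xp; try apply b_bounds; lra).
  fold x. rewrite Xm, Xi, Xp.
  replace (INR i * h - (INR i * h - h)) with h by ring.
  replace (INR i * h + h - INR i * h) with h by ring.
  rewrite Rmult_assoc, (Rmult_assoc KK). apply Rabs_mul_le; [rewrite Rabs_Ropp; exact HK|].
  eapply Rle_trans.
  { apply (tau_exp_uniform_decay eps h (INR i * h) (b 0) (b (INR i * h)) L bmax beta gam);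
      try (unfold gam; lra).
    - apply Hlip. lra.
    - apply Rle_trans with (L * H); [apply Rmult_le_compat_l|]; lra. }
  right. rewrite ln_eps.
  replace (h / eps) with (a / (beta * Q) * l / n)
    by (unfold h; rewrite HJ, xi_eq; fold n; field; repeat split; lra).
  field. lra.
Qed.

Let coarse_exp_factor y : xi + H <= y ->
  (H / eps)^2 * exp (- beta * y / eps)
    <= (poly_exp_const 0 beta + / (1 - Q)^2) * (R2 * Rmin (eps^2) (/ n^2)).
Proof.
  intros Hy. set (eta := H / eps).
  assert (Heta : 0 <= eta) by (unfold eta; apply Rdiv_le_0_compat; lra).
  assert (HCe : 0 <= poly_exp_const 0 beta) by (apply poly_exp_const_nonneg; lra).
  assert (HQ2 : 0 < / (1 - Q)^2) by (apply Rinv_0_lt_compat, pow_lt; lra).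
  assert (Hexp : exp (- beta * y / eps) <= R2 * eps^2 * exp (- beta * eta)).
  { rewrite <- exp_beta_xi, <- exp_plus. apply exp_le_exp. unfold eta.
    apply (Rmult_le_reg_r eps); [lra|]. field_simplify; [nra|lra|lra]. }
  assert (Hpoly : eta^2 * exp (- beta * eta) <= poly_exp_const 0 beta).
  { pose proof (poly_mul_exp_opp_bound 0 beta eta ltac:(lra) Hbeta Heta).
    rewrite Rmult_0_l, Rplus_0_r, pow1, Rmult_1_r in H0. exact H0. }
  pose proof (exp_pos (- beta * eta)).
  apply Rle_trans with (eta^2 * exp (- beta * eta) * (R2 * eps^2)).
  { replace (eta^2 * exp (- beta * eta) * (R2 * eps^2))
      with (eta^2 * (R2 * eps^2 * exp (- beta * eta))) by ring.
    apply Rmult_le_compat_l; [apply pow2_ge_0|exact Hexp]. }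
  unfold Rmin. destruct (Rle_dec (eps^2) (/ n^2)).
  - apply Rle_trans with (poly_exp_const 0 beta * (R2 * eps^2)).
    + apply Rmult_le_compat_r; [|exact Hpoly]. pose proof (pow2_ge_0 eps). nra.
    + apply Rmult_le_compat_r; [pose proof (pow2_ge_0 eps); nra|lra].
  - assert (HH : (eta * eps)^2 <= / (1 - Q)^2 * / n^2).
    { replace (eta * eps) with H by (unfold eta; field; lra).
      rewrite <- Rinv_mult, <- Rpow_mult_distr, <- pow_inv.
      apply pow_incr. pose proof H_bounds. pose proof (Rinv_0_lt_compat n ltac:(lra)). lra. }
    assert (exp (- beta * eta) <= 1) by (replace (- beta * eta) with (- (beta * eta)) by ring;
                                        apply exp_opp_le_1; nra).
    apply Rle_trans with (/ (1 - Q)^2 * (R2 * / n^2)).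
    + replace (eta^2 * exp (- beta * eta) * (R2 * eps^2))
        with (R2 * ((eta * eps)^2 * exp (- beta * eta))) by ring.
      replace (/ (1 - Q)^2 * (R2 * / n^2)) with (R2 * ((/ (1 - Q)^2 * / n^2) * 1)) by ring.
      apply Rmult_le_compat_l; [lra|].
      apply Rmult_le_compat; [apply pow2_ge_0|lra|exact HH|lra].
    + apply Rmult_le_compat_r; [|lra].
      pose proof (Rinv_0_lt_compat (n^2) ltac:(apply pow_lt; lra)). nra.
Qed.

Let Ccoarse :=
  KK * (bmax^2 * L^2 / 6 * poly_exp_const bmax gam * (poly_exp_const 0 beta + / (1 - Q)^2)).

Lemma tau_vlayer_coarse_bound i : (J + 1 <= i <= N - 1)%nat ->
  Rabs (tau eps a beta (/ eps) N J b (vlayer eps b u) i) <= Ccoarse * (R2 * Rmin (eps ^ 2) (/ n ^ 2)).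
Proof.
  intros Hi. unfold Ccoarse.
  set (y := xi + (INR i - INR J) * H).
  assert (Xm : x (i - 1)%nat = y - H) by (rewrite mesh_coarse_at, minus_INR by lia; unfold y; simpl; ring).
  assert (Xp : x (S i) = y + H) by (rewrite mesh_coarse_at, S_INR by lia; unfold y; ring).
  assert (Xi : x i = y) by (apply mesh_coarse_at; lia).
  assert (HiJ : INR J + 1 <= INR i) by (rewrite <- S_INR; apply le_INR; lia).
  assert (HiN : INR i <= n - 1).
  { assert (INR i <= INR (N - 1)) by (apply le_INR; lia).
    rewrite minus_INR in H0 by lia. simpl in H0. fold n in H0. lra. }
  assert (HH : 0 < H) by (pose proof H_bounds; pose proof (Rinv_0_lt_compat n ltac:(lra)); lra).
  assert (Hy : xi + H <= y <= 1).
  { assert (H * (n - INR J) = 1 - xi) by (unfold H; rewrite N_sub_J; field; split; lra).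
    unfold y. split; nra. }
  pose proof (Hb 0 ltac:(lra)). pose proof (b_bounds y ltac:(lra)).
  rewrite tau_vlayer_node by (try lia; fold x; rewrite ?Xm, ?Xi, ?Xp; try apply b_bounds; lra).
  fold x. rewrite Xm, Xi, Xp.
  replace (y - (y - H)) with H by ring. replace (y + H - y) with H by ring.
  rewrite Rmult_assoc, (Rmult_assoc KK). apply Rabs_mul_le; [rewrite Rabs_Ropp; exact HK|].
  eapply Rle_trans.
  { apply (tau_exp_uniform_decay eps H y (b 0) (b y) L bmax beta gam); try (unfold gam; lra).
    - apply Hlip. lra.
    - exact LH_le. }
  set (G := bmax^2 * L^2 / 6 * poly_exp_const bmax gam).
  rewrite !(Rmult_assoc G). apply Rmult_le_compat_l; [|now apply coarse_exp_factor].
  pose proof (pow2_ge_0 bmax). pose proof (pow2_ge_0 L).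
  pose proof (poly_exp_const_nonneg bmax gam ltac:(lra) ltac:(unfold gam; lra)).
  unfold G. apply Rmult_le_pos; [|lra]. nra.
Qed.

Let exp_b0_xi : exp (- b 0 * xi / eps) <= R2 * eps ^ 2.
Proof.
  rewrite <- exp_beta_xi. apply exp_le_exp. pose proof (Hb 0 ltac:(lra)).
  apply Rmult_le_compat_r; [left; apply Rinv_0_lt_compat; lra|]. nra.
Qed.

Let exp_b0_xi_h : exp (- b 0 * xi / eps) * exp (b 0 * h / eps) <= R2 * eps ^ 2.
Proof.
  rewrite <- exp_beta_xi, <- exp_plus. apply exp_le_exp.
  assert (Hxh : xi - h = xi * (1 - / INR J)) by (unfold h; field; lra).
  assert (beta * xi <= b 0 * (xi - h)) by (rewrite Hxh; nra).
  apply (Rmult_le_reg_r eps); [lra|].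
  replace ((- b 0 * xi / eps + b 0 * h / eps) * eps) with (- (b 0 * (xi - h))) by (field; lra).
  replace (- beta * xi / eps * eps) with (- (beta * xi)) by (field; lra). lra.
Qed.

Let Cl := bmax * L * (a / beta) / ((bmin / beta - 1) * a).

(* [|b xi - b 0| / eps] is only [O(ln (1/eps))]; the surplus decay [b 0 > beta] absorbs the log. *)
Let exp_b0_xi_lip : b 0 / eps * Rabs (b xi - b 0) * exp (- b 0 * xi / eps) <= Cl * (R2 * eps ^ 2).
Proof.
  pose proof (Hb 0 ltac:(lra)).
  set (kap := (bmin / beta - 1) * a).
  assert (Hkap : 0 < kap).
  { unfold kap. apply Rmult_lt_0_compat; [|lra].
    apply (Rmult_lt_reg_r beta); [lra|]. unfold Rdiv. rewrite Rmult_minus_distr_r, Rmult_assoc, Rinv_l; lra. }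
  assert (Hd : Rabs (b xi - b 0) <= L * xi) by (apply Hlip; lra).
  assert (HEx : exp (- b 0 * xi / eps) = R2 * eps ^ 2 * exp (- ((b 0 / beta - 1) * a) * l)).
  { rewrite <- exp_beta_xi, <- exp_plus. f_equal. rewrite xi_eq. field. lra. }
  assert (Hel : l * exp (- ((b 0 / beta - 1) * a) * l) <= / kap).
  { apply Rle_trans with (l * exp (- kap * l)); [|apply mul_exp_opp_le_inv; lra].
    apply Rmult_le_compat_l; [lra|]. apply exp_le_exp.
    assert (kap <= (b 0 / beta - 1) * a).
    { unfold kap. apply Rmult_le_compat_r; [lra|]. unfold Rdiv.
      apply Rplus_le_compat_r, Rmult_le_compat_r; [left; apply Rinv_0_lt_compat|]; lra. }
    nra. }
  apply Rle_trans with (b 0 / eps * (L * xi) * exp (- b 0 * xi / eps)).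
  { apply Rmult_le_compat_r; [left; apply exp_pos|].
    apply Rmult_le_compat_l; [apply Rdiv_le_0_compat|]; lra. }
  rewrite HEx.
  replace (b 0 / eps * (L * xi) * (R2 * eps ^ 2 * exp (- ((b 0 / beta - 1) * a) * l)))
    with (b 0 * L * (a / beta) * (R2 * eps ^ 2) * (l * exp (- ((b 0 / beta - 1) * a) * l)))
    by (rewrite xi_eq; field; lra).
  replace (Cl * (R2 * eps ^ 2)) with (bmax * L * (a / beta) * (R2 * eps ^ 2) * / kap)
    by (unfold Cl, kap; field; lra).
  assert (0 <= a / beta) by (apply Rdiv_le_0_compat; lra).
  assert (0 <= R2 * eps ^ 2) by (pose proof (pow2_ge_0 eps); nra).
  apply Rmult_le_compat; [| |apply Rmult_le_compat_r; [lra|]; apply Rmult_le_compat_r; [lra|]; nra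
                          |exact Hel].
  - apply Rmult_le_pos; [|lra]. apply Rmult_le_pos; [|lra]. nra.
  - apply Rmult_le_pos; [lra|left; apply exp_pos].
Qed.

Let inv_H_le : / H <= n.
Proof.
  pose proof H_bounds. pose proof (Rinv_0_lt_compat n ltac:(lra)).
  rewrite <- (Rinv_inv n). apply Rinv_le_contravar; lra.
Qed.

Let transition_crude : eps * n <= 1 ->
  exp (- b 0 * xi / eps) * Rabs (tau_exp eps (b 0) (b xi) h H)
    <= (2 + 3 * bmax + Cl) * (R2 * eps ^ 2 * n).
Proof.
  intros Hen.
  pose proof (Hb 0 ltac:(lra)). pose proof (b_bounds xi ltac:(lra)). pose proof inv_H_le.
  pose proof exp_b0_xi. pose proof exp_b0_xi_h. pose proof exp_b0_xi_lip.
  set (E := exp (- b 0 * xi / eps)) in *.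
  assert (HE : 0 < E) by apply exp_pos.
  assert (HHinv : 0 < / H) by (apply Rinv_0_lt_compat; lra).
  assert (HR : 0 <= R2 * eps ^ 2) by (pose proof (pow2_ge_0 eps); nra).
  pose proof (tau_exp_crude_bound eps (b 0) (b xi) h H bmax ltac:(lra) ltac:(lra) ltac:(lra) H1).
  apply Rle_trans with (E * (2 * eps / H ^ 2 + 2 * b 0 * exp (b 0 * h / eps) / H + bmax / H
                             + b 0 / eps * Rabs (b xi - b 0))).
  { apply Rmult_le_compat_l; lra. }
  assert (T1 : E * (2 * eps / H ^ 2) <= 2 * (R2 * eps ^ 2) * n).
  { replace (E * (2 * eps / H ^ 2)) with (2 * E * (eps * / H) * / H) by (field; lra).
    assert (eps * / H <= 1) by (apply Rle_trans with (eps * n); [apply Rmult_le_compat_l|]; lra).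
    assert (0 <= eps * / H) by (apply Rmult_le_pos; lra).
    apply Rmult_le_compat; [nra|lra| |lra].
    replace (2 * (R2 * eps ^ 2)) with (2 * (R2 * eps ^ 2) * 1) by ring.
    apply Rmult_le_compat; nra. }
  assert (T2 : E * (2 * b 0 * exp (b 0 * h / eps) / H) <= 2 * bmax * (R2 * eps ^ 2) * n).
  { replace (E * (2 * b 0 * exp (b 0 * h / eps) / H))
      with (2 * b 0 * (E * exp (b 0 * h / eps)) * / H) by (field; lra).
    pose proof (exp_pos (b 0 * h / eps)).
    apply Rmult_le_compat; [|lra| |lra]; [apply Rmult_le_pos; nra|].
    apply Rmult_le_compat; nra. }
  assert (T3 : E * (bmax / H) <= bmax * (R2 * eps ^ 2) * n).
  { replace (E * (bmax / H)) with (bmax * E * / H) by (field; lra).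
    apply Rmult_le_compat; [nra|lra| |lra]. apply Rmult_le_compat_l; lra. }
  assert (T4 : E * (b 0 / eps * Rabs (b xi - b 0)) <= Cl * (R2 * eps ^ 2) * n).
  { assert (0 <= Cl * (R2 * eps ^ 2)).
    { apply Rle_trans with (b 0 / eps * Rabs (b xi - b 0) * E); [|lra].
      apply Rmult_le_pos; [apply Rmult_le_pos; [apply Rdiv_le_0_compat|apply Rabs_pos]|]; lra. }
    rewrite Rmult_comm. nra. }
  rewrite !Rmult_plus_distr_l. lra.
Qed.

Let Amax := bmax / (1 - Q).
Let CII := bmax ^ 2 * (L * (2 + Amax * exp Amax) + bmax * (exp Amax + 1)) / (1 - Q).

Let transition_taylor : 1 < eps * n ->
  exp (- b 0 * xi / eps) * Rabs (tau_exp eps (b 0) (b xi) h H) <= CII * (R2 * / n ^ 2 * n).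
Proof.
  intros Hen.
  pose proof (Hb 0 ltac:(lra)). pose proof (b_bounds xi ltac:(lra)). pose proof H_bounds.
  pose proof exp_b0_xi.
  set (E := exp (- b 0 * xi / eps)) in *.
  assert (HE : 0 < E) by apply exp_pos.
  assert (HAm : 0 <= Amax) by (unfold Amax; apply Rdiv_le_0_compat; lra).
  pose proof (exp_pos Amax).
  assert (HAe : 0 <= Amax * exp Amax) by (apply Rmult_le_pos; lra).
  assert (HAb : b 0 * H / eps <= Amax).
  { assert (/ n <= eps) by (apply (Rmult_le_reg_r n); [|rewrite Rinv_l]; lra).
    assert (H <= / (1 - Q) * eps).
    { apply Rle_trans with (/ ((1 - Q) * n)); [lra|]. rewrite Rinv_mult.
      apply Rmult_le_compat_l; [left; apply Rinv_0_lt_compat|]; lra. }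
    apply (Rle_div_l _ _ eps ltac:(lra)). unfold Amax, Rdiv.
    assert (0 < / (1 - Q)) by (apply Rinv_0_lt_compat; lra). nra. }
  pose proof (tau_exp_taylor_bound eps (b 0) h H Amax ltac:(lra) ltac:(lra) ltac:(lra) HAb (b xi)
                ltac:(lra)) as HT.
  assert (Hd : Rabs (b xi - b 0) <= L) by (apply Rle_trans with (L * xi); [apply Hlip|]; nra).
  apply Rle_trans with (E / eps ^ 2 * b 0 ^ 2 * H
                        * (Rabs (b xi - b 0) * (2 + Amax * exp Amax) + b 0 * (exp Amax + 1))).
  { replace (E / eps ^ 2 * b 0 ^ 2 * H
             * (Rabs (b xi - b 0) * (2 + Amax * exp Amax) + b 0 * (exp Amax + 1)))
      with (E * (b 0 ^ 2 * H / eps ^ 2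
                 * (Rabs (b xi - b 0) * (2 + Amax * exp Amax) + b 0 * (exp Amax + 1))))
      by (field; lra).
    apply Rmult_le_compat_l; lra. }
  replace (CII * (R2 * / n ^ 2 * n))
    with (R2 * bmax ^ 2 * / ((1 - Q) * n) * (L * (2 + Amax * exp Amax) + bmax * (exp Amax + 1)))
    by (unfold CII; field; lra).
  assert (HEe : E / eps ^ 2 <= R2) by (apply Rle_div_l; [apply pow_lt|]; lra).
  assert (0 <= E / eps ^ 2) by (apply Rdiv_le_0_compat; [|apply pow_lt]; lra).
  pose proof (pow2_ge_0 (b 0)). pose proof (Rabs_pos (b xi - b 0)).
  apply Rmult_le_compat; [| |repeat apply Rmult_le_compat; try apply pow_incr; nra|nra].
  - apply Rmult_le_pos; [apply Rmult_le_pos|]; lra.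
  - nra.
Qed.

Let Ctrans := KK * ((2 + 3 * bmax + Cl) + CII).

Lemma tau_vlayer_transition_bound :
  Rabs (tau eps a beta (/ eps) N J b (vlayer eps b u) J) <=
    Ctrans * (R2 * Rmin (eps ^ 2) (/ n ^ 2) * n).
Proof.
  unfold Ctrans. pose proof J_ge_1.
  assert (Xm : x (J - 1)%nat = xi - h).
  { rewrite mesh_fine_at, minus_INR by lia. simpl. rewrite Rmult_minus_distr_r, Rmult_comm, h_mul_J. ring. }
  assert (XJ : x J = xi) by (rewrite mesh_fine_at, Rmult_comm by lia; exact h_mul_J).
  assert (Xp : x (S J) = xi + H) by (rewrite mesh_coarse_at, S_INR by lia; ring).
  pose proof (Hb 0 ltac:(lra)). pose proof (b_bounds xi ltac:(lra)).
  rewrite tau_vlayer_node by (try lia; fold x; rewrite ?Xm, ?XJ, ?Xp; try apply b_bounds; lra).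
  fold x. rewrite Xm, XJ, Xp.
  replace (xi - (xi - h)) with h by ring. replace (xi + H - xi) with H by ring.
  rewrite Rmult_assoc, (Rmult_assoc KK). apply Rabs_mul_le; [rewrite Rabs_Ropp; exact HK|].
  rewrite Rabs_mult, (Rabs_pos_eq (exp _)) by (left; apply exp_pos).
  assert (HCl : 0 <= Cl).
  { apply Rle_trans with (b 0 / eps * Rabs (b xi - b 0) * exp (- b 0 * xi / eps) / (R2 * eps^2)).
    - apply Rdiv_le_0_compat; [|pose proof (pow_lt eps 2 ltac:(lra)); nra].
      apply Rmult_le_pos; [apply Rmult_le_pos; [apply Rdiv_le_0_compat|apply Rabs_pos]|]; try lra.
      left; apply exp_pos.
    - apply Rle_div_l; [pose proof (pow_lt eps 2 ltac:(lra)); nra|exact exp_b0_xi_lip]. }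
  assert (HCII : 0 <= CII).
  { assert (0 <= Amax) by (unfold Amax; apply Rdiv_le_0_compat; lra). pose proof (exp_pos Amax).
    assert (0 <= Amax * exp Amax) by (apply Rmult_le_pos; lra).
    unfold CII. apply Rdiv_le_0_compat; [|lra]. apply Rmult_le_pos; [apply pow2_ge_0|].
    apply Rplus_le_le_0_compat; apply Rmult_le_pos; lra. }
  assert (0 <= R2 * eps ^ 2 * n) by (pose proof (pow2_ge_0 eps); apply Rmult_le_pos; nra).
  assert (0 <= R2 * / n ^ 2 * n)
    by (pose proof (Rinv_0_lt_compat (n ^ 2) ltac:(apply pow_lt; lra)); apply Rmult_le_pos; nra).
  unfold Rmin. destruct (Rle_dec (eps ^ 2) (/ n ^ 2)) as [Hsmall|Hlarge].
  - assert (eps * n <= 1).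
    { destruct (Rle_lt_dec (eps * n) 1) as [|Hlt]; auto.
      assert (/ n < eps) by (apply (Rmult_lt_reg_r n); [|rewrite Rinv_l]; lra).
      assert (0 < / n) by (apply Rinv_0_lt_compat; lra).
      rewrite <- pow_inv in Hsmall. nra. }
    apply Rle_trans with ((2 + 3 * bmax + Cl) * (R2 * eps ^ 2 * n)); [now apply transition_crude|].
    apply Rmult_le_compat_r; lra.
  - assert (1 < eps * n).
    { destruct (Rle_lt_dec (eps * n) 1) as [Hle|]; auto.
      assert (eps <= / n) by (apply (Rmult_le_reg_r n); [|rewrite Rinv_l]; lra).
      rewrite <- pow_inv in Hlarge. exfalso. apply Hlarge, pow_incr. lra. }
    apply Rle_trans with (CII * (R2 * / n ^ 2 * n)); [now apply transition_taylor|].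
    apply Rmult_le_compat_r; lra.
Qed.

Let Rmin_nonneg : 0 <= Rmin (eps ^ 2) (/ n ^ 2).
Proof.
  unfold Rmin. destruct (Rle_dec (eps ^ 2) (/ n ^ 2)); [apply pow2_ge_0|].
  left. apply Rinv_0_lt_compat, pow_lt. lra.
Qed.

Lemma tau_vlayer_bounds :
  let C := Rmax Cfine (Rmax Ctrans Ccoarse) in
  let mu := R2 * Rmin (eps ^ 2) (/ n ^ 2) in
  (forall i : nat, (1 <= i <= J - 1)%nat ->
     Rabs (tau eps a beta (/ eps) N J b (vlayer eps b u) i)
       <= C * ((ln eps) ^ 2 * / n ^ 2 * exp (- beta * x i / eps))) /\
  Rabs (tau eps a beta (/ eps) N J b (vlayer eps b u) J) <= C * (mu * n) /\
  (forall i : nat, (J + 1 <= i <= N - 1)%nat ->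
     Rabs (tau eps a beta (/ eps) N J b (vlayer eps b u) i) <= C * mu).
Proof.
  intros C mu. pose proof (Rinv_0_lt_compat (n ^ 2) ltac:(apply pow_lt; lra)).
  assert (0 <= mu) by (apply Rmult_le_pos; lra).
  split; [|split].
  - intros i Hi. eapply le_mul_const_weaken; [now apply tau_vlayer_fine_bound|apply Rmax_l|].
    apply Rmult_le_pos; [apply Rmult_le_pos; [apply pow2_ge_0|lra]|left; apply exp_pos].
  - eapply le_mul_const_weaken; [apply tau_vlayer_transition_bound| |apply Rmult_le_pos; lra].
    eapply Rle_trans; [apply Rmax_l|apply Rmax_r].
  - intros i Hi. eapply le_mul_const_weaken; [now apply tau_vlayer_coarse_bound| |lra].
    eapply Rle_trans; [apply Rmax_r|apply Rmax_r].
Qed.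

End LayerMesh.

Theorem lemma2 :
  forall (b c f : R -> R) (beta Q a : R),
    C4_01 b -> C4_01 c -> C4_01 f ->
    0 < beta ->
    (forall x, 0 <= x <= 1 -> beta < b x) ->
    (forall x, 0 <= x <= 1 -> 0 <= c x) ->
    (exists p q : Z, (0 < q)%Z /\ Q = IZR p / IZR q) ->
    0 < Q < 1 ->
    2 <= a ->
  exists (N0 : nat) (C : R),
    forall (eps : R) (N J : nat) (u : R -> R),
      0 < eps < 1 ->
      (0 < N)%nat -> (N0 <= N)%nat ->
      INR J = Q * INR N ->
      xi_mesh eps a beta (/ eps) <= Q ->
      is_bvp_solution eps b c f u ->
      let x := mesh eps a beta (/ eps) N J in
      let mu := Rpower eps (a - 2) * Rmin (eps ^ 2) (/ (INR N ^ 2)) in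
      let t := tau eps a beta (/ eps) N J b (vlayer eps b u) in
      (forall i : nat, (1 <= i <= J - 1)%nat ->
         Rabs (t i) <= C * ((ln eps) ^ 2 * / (INR N ^ 2) * exp (- beta * x i / eps))) /\
      (Rabs (t J) <= C * (mu * INR N)) /\
      (forall i : nat, (J + 1 <= i <= N - 1)%nat ->
         Rabs (t i) <= C * mu).
Proof.
  intros b c f beta Q a Hb Hc Hf Hbeta Hbb Hcc _ HQ Ha.
  destruct (continuous_min_gt_01 b beta (C4_01_continuous b Hb) Hbb) as [bmin [Hbmin Hbmin_le]].
  destruct (continuous_abs_bounded_01 b (C4_01_continuous b Hb)) as [bmax [_ Hbmax]].
  destruct (C4_01_lipschitz_at_0 b Hb) as [L [HL Hlip]].
  destruct (vlayer_amplitude_bound b c f beta Hb Hc Hf Hbeta Hbb Hcc) as [KK [_ HKK]].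
  assert (Hbx : forall y, 0 <= y <= 1 -> bmin <= b y <= bmax).
  { intros y Hy. specialize (Hbmax y Hy). apply Rabs_le_between in Hbmax. split; [auto|lra]. }
  set (Nmin := L / ((1 - Q) * ((bmin - beta) / 2)) + bmax / (Q * (bmin - beta)) + 1).
  destruct (INR_archimed 1 Nmin Rlt_0_1) as [N0 HN0].
  exists N0. eexists.
  intros eps N J u Heps _ HN HJ Hxi Hsol.
  apply (tau_vlayer_bounds b beta Q a bmin bmax L eps N J); auto.
  apply le_INR in HN. unfold Nmin in HN0. lra.
Qed.
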